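(* Let $E_B<0$, $\mu>0$, $\tau>-\mu$, and set $\tilde\tau:=\tau/|E_B|$. Then for all $L>0$, $$\Bigl|G_\mu(\tau)-\frac1{4\pi}\log(\tilde\mu+\tilde\tau)\Bigr|\le\frac{K(\tilde\tau,\tilde\mu,\tilde L)}{\tilde L},$$ where $$K(\tilde\tau,\tilde\mu,\tilde L):=1+\frac3{\tilde L}+\frac1{\sqrt{\tilde\mu+\min\{\tilde\tau,1\}}}+\Bigl(\frac{4\sqrt{\tilde\mu}}{\pi}+\frac6{\tilde L}\Bigr)\frac1{\tilde\mu+\min\{\tilde\tau,1\}}.$$
   Context: Let $L>0$ and $\Lambda_L:=\frac{2\pi}{L}\mathbb Z^2$; sums over $k$ run over $\Lambda_L$. Fix $E_B<0$ and $\mu>0$, and set $\tilde\mu:=\mu/|E_B|$, $\tilde L:=L\sqrt{|E_B|}$. For $\tau>-\mu$ let $G_\mu(\tau):=L^{-2}\sum_k\bigl(\frac{1}{k^2-E_B}-\frac{\chi_{(\mu,\infty)}(k^2)}{k^2+\tau}\bigr)$. *)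

From Stdlib Require Import Reals Lra ZArith.
Open Scope R_scope.

Definition ksq (L : R) (n1 n2 : Z) : R :=
  (2 * PI / L) ^ 2 * (IZR n1 ^ 2 + IZR n2 ^ 2).

Definition chi_gt (mu x : R) : R := if Rlt_dec mu x then 1 else 0.

Definition G_term (L EB mu tau : R) (n1 n2 : Z) : R :=
  / (ksq L n1 n2 - EB) - chi_gt mu (ksq L n1 n2) / (ksq L n1 n2 + tau).

Definition sq_sum (f : Z -> Z -> R) (N : nat) : R :=
  sum_f_R0 (fun i => sum_f_R0 (fun j =>
     f (Z.of_nat i - Z.of_nat N)%Z (Z.of_nat j - Z.of_nat N)%Z) (2 * N)) (2 * N).

Definition G_partial (L EB mu tau : R) (N : nat) : R :=
  / L ^ 2 * sq_sum (G_term L EB mu tau) N.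

Definition Kconst (tt mt Lt : R) : R :=
  1 + 3 / Lt + / sqrt (mt + Rmin tt 1)
  + (4 * sqrt mt / PI + 6 / Lt) * / (mt + Rmin tt 1).

From Stdlib Require Import Reals Lra Lia ZArith.
From Coquelicot Require Import Coquelicot AutoDerive.
Open Scope R_scope.

(** Rescaling lengths by [sqrt |E_B|] reduces everything to [E_B = -1].  With [k = 2 PI / L]
    the summand at [(a, b)] is a function [g] of [c = a^2 + b^2] alone, so summation by parts
    over the shells [c = m <= N^2] turns the sum over the disc of radius [N] into
    [sum_m A(m) (g(m) - g(m+1))], where [A] counts lattice points in discs.  Gauss' estimate
    [|A(x^2) - PI x^2| <= 4 x + 1] compares this with [int PI x^2 (- g'(x)) dx], whose closed
    form yields [ln (mu + tau) / (4 PI)], while the error [int (4 x + 1) |g'(x)| dx] is bounded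
    by explicit primitives; this gives the constant [K].  Outside the disc of radius [N] the
    summand is [O(N^-4)], which makes the square partial sums Cauchy and the boundary terms
    negligible. *)

(** * Sums over symmetric integer ranges *)

Definition symsum (g : Z -> R) (N : nat) : R :=
  sum_f_R0 (fun i => g (Z.of_nat i - Z.of_nat N)%Z) (2 * N).

Lemma sq_sum_symsum f N : sq_sum f N = symsum (fun a => symsum (fun b => f a b) N) N.
Proof. reflexivity. Qed.

Lemma symsum_0 g : symsum g 0 = g 0%Z.
Proof. reflexivity. Qed.

Lemma symsum_S g N :
  symsum g (S N) = symsum g N + g (Z.of_nat (S N)) + g (- Z.of_nat (S N))%Z.
Proof.
  unfold symsum.
  replace (2 * S N)%nat with (S (S (2 * N))) by lia.
  rewrite tech5, (decomp_sum _ (S (2 * N))) by lia; simpl pred.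
  replace (g (Z.of_nat (S (S (2 * N))) - Z.of_nat (S N))%Z) with (g (Z.of_nat (S N)))
    by (f_equal; lia).
  replace (g (Z.of_nat 0 - Z.of_nat (S N))%Z) with (g (- Z.of_nat (S N))%Z) by (f_equal; lia).
  rewrite (sum_eq _ (fun i => g (Z.of_nat i - Z.of_nat N)%Z)).
  - replace (N + (N + 0))%nat with (2 * N)%nat by lia. ring.
  - intros i _. f_equal. lia.
Qed.

Lemma symsum_ext g1 g2 N : (forall a, g1 a = g2 a) -> symsum g1 N = symsum g2 N.
Proof. intros H. apply sum_eq. intros; apply H. Qed.

Lemma symsum_plus g1 g2 N : symsum (fun a => g1 a + g2 a) N = symsum g1 N + symsum g2 N.
Proof. apply sum_plus. Qed.

Lemma symsum_scal c g N : symsum (fun a => c * g a) N = c * symsum g N.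
Proof. unfold symsum. rewrite scal_sum. apply sum_eq. intros; ring. Qed.

Lemma symsum_minus g1 g2 N : symsum (fun a => g1 a - g2 a) N = symsum g1 N - symsum g2 N.
Proof.
  rewrite (symsum_ext _ (fun a => g1 a + -1 * g2 a)) by (intros; ring).
  rewrite symsum_plus, symsum_scal. ring.
Qed.

Lemma symsum_le g1 g2 N : (forall a, g1 a <= g2 a) -> symsum g1 N <= symsum g2 N.
Proof. intros H. apply sum_Rle. intros; apply H. Qed.

Lemma symsum_const c N : symsum (fun _ => c) N = (2 * INR N + 1) * c.
Proof.
  induction N as [|N IH]; [rewrite symsum_0; simpl; ring|].
  rewrite symsum_S, IH, S_INR. ring.
Qed.

Lemma symsum_abs g N : Rabs (symsum g N) <= symsum (fun a => Rabs (g a)) N.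
Proof. apply sum_f_R0_triangle. Qed.

Lemma symsum_bound g C N :
  (forall a, Rabs (g a) <= C) -> Rabs (symsum g N) <= (2 * INR N + 1) * C.
Proof.
  intros H. eapply Rle_trans; [apply symsum_abs|].
  rewrite <- symsum_const. apply symsum_le. exact H.
Qed.

Fixpoint sum_lt (f : nat -> R) (n : nat) : R :=
  match n with O => 0 | S n => sum_lt f n + f n end.

Fixpoint sum_1n (f : nat -> R) (n : nat) : R :=
  match n with O => 0 | S n => sum_1n f n + f (S n) end.

Lemma sum_lt_ext f1 f2 n :
  (forall m, (m < n)%nat -> f1 m = f2 m) -> sum_lt f1 n = sum_lt f2 n.
Proof.
  induction n as [|n IH]; intros H; simpl; auto.
  rewrite IH by (intros; apply H; lia). rewrite H by lia. reflexivity.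
Qed.

Lemma symsum_sum_lt g n N :
  symsum (fun a => sum_lt (fun m => g a m) n) N = sum_lt (fun m => symsum (fun a => g a m) N) n.
Proof.
  induction n as [|n IH]; simpl.
  - rewrite symsum_const; ring.
  - rewrite symsum_plus, IH. reflexivity.
Qed.

Lemma sum_1n_le f g N : (forall k, (1 <= k <= N)%nat -> f k <= g k) -> sum_1n f N <= sum_1n g N.
Proof.
  induction N as [|N IH]; intros H; simpl; [lra|].
  apply Rplus_le_compat; [apply IH; intros; apply H|apply H]; lia.
Qed.

Lemma sum_1n_telescope (D : nat -> R) N : sum_1n (fun k => D k - D (pred k)) N = D N - D 0%nat.
Proof. induction N as [|N IH]; simpl; [ring|]. rewrite IH. simpl. ring. Qed.

Lemma sum_1n_pred f N : sum_1n (fun k => f (pred k)) N = f 0%nat + sum_1n f N - f N.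
Proof. induction N as [|N IH]; simpl; [ring|]. rewrite IH. simpl. ring. Qed.

Lemma symsum_split g N :
  symsum g N = g 0%Z + sum_1n (fun k => g (Z.of_nat k) + g (- Z.of_nat k)%Z) N.
Proof.
  induction N as [|N IH]; [rewrite symsum_0; simpl; ring|].
  rewrite symsum_S, IH. cbn [sum_1n]. ring.
Qed.

(** * Counting lattice points in a disc *)

Definition ind_le (x y : R) : R := if Rle_dec x y then 1 else 0.

Lemma le_of_derive_nonneg (H dH : R -> R) (a b : R) :
  a <= b -> (forall x, a <= x <= b -> is_derive H x (dH x)) ->
  (forall x, a < x < b -> 0 <= dH x) -> H a <= H b.
Proof.
  intros Hab Hd Hp. destruct (Rle_lt_or_eq_dec _ _ Hab) as [Hlt|<-]; [|lra].
  destruct (MVT_cor2 H dH a b Hlt) as [c [Hc1 Hc2]].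
  - intros c Hc. apply is_derive_Reals, Hd; lra.
  - assert (0 <= dH c) by (apply Hp; lra). nra.
Qed.

Lemma pow2_le_iff_le_sqrt k y : 0 <= k -> 0 <= y -> (k ^ 2 <= y <-> k <= sqrt y).
Proof.
  intros Hk Hy. pose proof (sqrt_sqrt y Hy). pose proof (sqrt_pos y).
  split; intros; nra.
Qed.

Lemma IZR_opp_of_nat_pow2 k : IZR (- Z.of_nat k) ^ 2 = INR k ^ 2.
Proof. rewrite opp_IZR, <- INR_IZR_INZ. ring. Qed.

Definition line_count (N : nat) (y : R) : R := symsum (fun b => ind_le (IZR b ^ 2) y) N.

Lemma line_count_S N y : line_count (S N) y = line_count N y + 2 * ind_le (INR (S N) ^ 2) y.
Proof. unfold line_count. rewrite symsum_S, IZR_opp_of_nat_pow2, <- INR_IZR_INZ. ring. Qed.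

Lemma line_count_between N y : 0 <= y ->
  2 * Rmin (INR N) (sqrt y - 1) + 1 <= line_count N y <= 2 * Rmin (INR N) (sqrt y) + 1.
Proof.
  intros Hy. pose proof (sqrt_pos y).
  induction N as [|N IH].
  - unfold line_count, ind_le. rewrite symsum_0. simpl.
    destruct Rle_dec; unfold Rmin; destruct Rle_dec; destruct Rle_dec; lra.
  - rewrite line_count_S. unfold ind_le at 1 2. pose proof (pos_INR N). rewrite S_INR in *.
    destruct Rle_dec as [h|h].
    + apply pow2_le_iff_le_sqrt in h; [|lra|lra].
      unfold Rmin in *; repeat destruct Rle_dec; lra.
    + assert (~ (INR N + 1 <= sqrt y)) by (intro h2; apply h, pow2_le_iff_le_sqrt; lra).
      unfold Rmin in *; repeat destruct Rle_dec; lra.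
Qed.

Lemma line_count_neg N y : y < 0 -> line_count N y = 0.
Proof.
  intros Hy. unfold line_count. rewrite <- (Rmult_0_r (2 * INR N + 1)), <- symsum_const.
  apply symsum_ext. intros a. unfold ind_le. destruct Rle_dec; auto.
  pose proof (pow2_ge_0 (IZR a)). lra.
Qed.

Lemma line_count_approx N y : 0 <= y -> y <= INR N ^ 2 ->
  2 * sqrt y - 1 <= line_count N y <= 2 * sqrt y + 1.
Proof.
  intros H1 H2.
  assert (sqrt y <= INR N)
    by (rewrite <- (sqrt_pow2 (INR N)) by apply pos_INR; apply sqrt_le_1_alt; auto).
  pose proof (line_count_between N y H1).
  unfold Rmin in *; repeat destruct Rle_dec; lra.
Qed.

(** [circ_prim t x] is the area under the quarter circle [s |-> sqrt (t - s^2)] over [[0, x]],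
    computed through the angle [asin (x / sqrt t)]. *)

Definition circ_prim_angle (t th : R) : R := t / 2 * (th + sin th * cos th).
Definition circ_prim (t x : R) : R := circ_prim_angle t (asin (x / sqrt t)).

Lemma circ_prim_angle_derive t th : is_derive (circ_prim_angle t) th (t * cos th ^ 2).
Proof.
  unfold circ_prim_angle. auto_derive; auto.
  pose proof (sin2_cos2 th) as E. unfold Rsqr in E.
  transitivity (t / 2 * (1 + cos th * cos th - sin th * sin th)); [ring|].
  replace (sin th * sin th) with (1 - cos th * cos th) by lra. field.
Qed.

Lemma asin_nonneg x : 0 <= x <= 1 -> 0 <= asin x.
Proof.
  intros Hx. destruct (Rle_or_lt 0 (asin x)) as [h|h]; auto.
  pose proof (asin_bound x). pose proof PI_RGT_0.
  assert (sin (asin x) < 0) by (apply sin_lt_0_var; lra).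
  rewrite sin_asin in *; lra.
Qed.

Lemma asin_le x y : -1 <= x -> x <= y -> y <= 1 -> asin x <= asin y.
Proof.
  intros. destruct (Rle_or_lt (asin x) (asin y)) as [h|h]; auto.
  pose proof (asin_bound x). pose proof (asin_bound y).
  assert (sin (asin y) < sin (asin x)) by (apply sin_increasing_1; lra).
  rewrite !sin_asin in *; lra.
Qed.

Lemma div_sqrt_in_01 t x : 0 < t -> 0 <= x -> x <= sqrt t -> 0 <= x / sqrt t <= 1.
Proof.
  intros Ht Hx Hxr. pose proof (sqrt_lt_R0 t Ht). split.
  - apply Rdiv_le_0_compat; auto.
  - apply Rmult_le_reg_r with (sqrt t); auto. unfold Rdiv. rewrite Rmult_assoc, Rinv_l; lra.
Qed.

Lemma sqrt_mul_cos_asin t x : 0 < t -> 0 <= x -> x <= sqrt t ->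
  sqrt t * cos (asin (x / sqrt t)) = sqrt (t - x ^ 2).
Proof.
  intros Ht Hx Hxr. pose proof (sqrt_lt_R0 t Ht). pose proof (sqrt_sqrt t (Rlt_le _ _ Ht)).
  pose proof (div_sqrt_in_01 t x Ht Hx Hxr).
  rewrite cos_asin, <- sqrt_mult_alt by lra. f_equal. unfold Rsqr.
  replace (x / sqrt t * (x / sqrt t)) with (x ^ 2 / (sqrt t * sqrt t)) by (field; lra).
  rewrite H0. field. lra.
Qed.

Lemma sqrt_mul_sin_asin t x : 0 < t -> 0 <= x -> x <= sqrt t ->
  sqrt t * sin (asin (x / sqrt t)) = x.
Proof.
  intros Ht Hx Hxr. pose proof (sqrt_lt_R0 t Ht). pose proof (div_sqrt_in_01 t x Ht Hx Hxr).
  rewrite sin_asin by lra. field. lra.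
Qed.

Lemma circ_prim_angle_increment_bounds t th1 th2 : 0 <= t -> 0 <= th1 <= th2 -> th2 <= PI / 2 ->
  t * cos th2 * (sin th2 - sin th1) <= circ_prim_angle t th2 - circ_prim_angle t th1
  <= t * cos th1 * (sin th2 - sin th1).
Proof.
  intros Ht Hth Hth2. pose proof PI_RGT_0.
  assert (Hcos : forall x, th1 < x < th2 -> 0 <= cos th2 <= cos x /\ cos x <= cos th1).
  { intros x Hx. repeat split; try apply cos_ge_0; try apply cos_decr_1; lra. }
  split.
  - enough (circ_prim_angle t th1 - t * cos th2 * sin th1
            <= circ_prim_angle t th2 - t * cos th2 * sin th2) by lra.
    apply (le_of_derive_nonneg (fun th => circ_prim_angle t th - t * cos th2 * sin th)
      (fun th => t * cos th ^ 2 - t * cos th2 * cos th)); [lra| |].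
    + intros x _. apply (is_derive_minus (circ_prim_angle t) (fun th => t * cos th2 * sin th)).
      * apply circ_prim_angle_derive.
      * auto_derive; auto. ring.
    + intros x Hx. destruct (Hcos x Hx) as [[H1 H2] _].
      replace (t * cos x ^ 2 - t * cos th2 * cos x) with (t * (cos x * (cos x - cos th2))) by ring.
      apply Rmult_le_pos; [lra|]. apply Rmult_le_pos; lra.
  - enough (t * cos th1 * sin th1 - circ_prim_angle t th1
            <= t * cos th1 * sin th2 - circ_prim_angle t th2) by lra.
    apply (le_of_derive_nonneg (fun th => t * cos th1 * sin th - circ_prim_angle t th)
      (fun th => t * cos th1 * cos th - t * cos th ^ 2)); [lra| |].
    + intros x _. apply (is_derive_minus (fun th => t * cos th1 * sin th) (circ_prim_angle t)).
      * auto_derive; auto. ring.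
      * apply circ_prim_angle_derive.
    + intros x Hx. destruct (Hcos x Hx) as [[H1 H2] H3].
      replace (t * cos th1 * cos x - t * cos x ^ 2) with (t * (cos x * (cos th1 - cos x))) by ring.
      apply Rmult_le_pos; [lra|]. apply Rmult_le_pos; lra.
Qed.

(** In the angle variable [th = asin (x / sqrt t)] we have [x = sqrt t sin th] and
    [sqrt (t - x^2) = sqrt t cos th]: the increment of [circ_prim t] lies between the rectangles
    with the heights at the two ends. *)
Lemma circ_prim_increment_bounds t x1 x2 : 0 < t -> 0 <= x1 -> x1 <= x2 -> x2 <= sqrt t ->
  (x2 - x1) * sqrt (t - x2 ^ 2) <= circ_prim t x2 - circ_prim t x1
  <= (x2 - x1) * sqrt (t - x1 ^ 2).
Proof.
  intros Ht H1 H12 H2. pose proof (sqrt_lt_R0 t Ht). pose proof (sqrt_sqrt t (Rlt_le _ _ Ht)).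
  pose proof (div_sqrt_in_01 t x1 Ht H1 ltac:(lra)) as D1.
  pose proof (div_sqrt_in_01 t x2 Ht ltac:(lra) H2) as D2.
  assert (S1 := sqrt_mul_sin_asin t x1 Ht ltac:(lra) ltac:(lra)).
  assert (S2 := sqrt_mul_sin_asin t x2 Ht ltac:(lra) ltac:(lra)).
  assert (C1 := sqrt_mul_cos_asin t x1 Ht ltac:(lra) ltac:(lra)).
  assert (C2 := sqrt_mul_cos_asin t x2 Ht ltac:(lra) ltac:(lra)).
  unfold circ_prim. set (r := sqrt t) in *.
  set (th1 := asin (x1 / r)) in *. set (th2 := asin (x2 / r)) in *.
  assert (T12 : th1 <= th2).
  { apply asin_le; try lra. unfold Rdiv. apply Rmult_le_compat_r; [|lra].
    left; apply Rinv_0_lt_compat; lra. }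
  pose proof (circ_prim_angle_increment_bounds t th1 th2 ltac:(lra)
    (conj (asin_nonneg _ D1) T12) (proj2 (asin_bound _))) as B.
  replace (t * cos th2 * (sin th2 - sin th1)) with ((r * cos th2) * (r * sin th2 - r * sin th1))
    in B by (rewrite <- H0; ring).
  replace (t * cos th1 * (sin th2 - sin th1)) with ((r * cos th1) * (r * sin th2 - r * sin th1))
    in B by (rewrite <- H0; ring).
  rewrite S1, S2, C1, C2 in B. lra.
Qed.

Lemma circ_prim_sqrt t : 0 < t -> circ_prim t (sqrt t) = PI * t / 4.
Proof.
  intros Ht. unfold circ_prim, circ_prim_angle.
  replace (sqrt t / sqrt t) with 1 by (field; apply Rgt_not_eq, sqrt_lt_R0; auto).
  rewrite asin_1, sin_PI2, cos_PI2. field.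
Qed.

Lemma circ_prim_0 t : circ_prim t 0 = 0.
Proof. unfold circ_prim, circ_prim_angle, Rdiv. rewrite Rmult_0_l, asin_0, sin_0. ring. Qed.

Definition half_chord_sum (t : R) (N : nat) : R := sum_1n (fun k => sqrt (t - INR k ^ 2)) N.

(** Clamping at [sqrt t] makes the comparison hold also for the vanishing half-chords past
    the circle. *)
Lemma circ_prim_clamped_step t k : 0 < t ->
  let D j := circ_prim t (Rmin (INR j) (sqrt t)) in
  sqrt (t - INR (S k) ^ 2) <= D (S k) - D k <= sqrt (t - INR k ^ 2).
Proof.
  intros Hp D. pose proof (sqrt_lt_R0 t Hp). pose proof (pos_INR k).
  set (X := fun j : nat => Rmin (INR j) (sqrt t)).
  assert (Hx1 : 0 <= X k <= sqrt t) by (unfold X, Rmin; destruct Rle_dec; lra).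
  assert (Hx12 : X k <= X (S k)) by (unfold X, Rmin; rewrite S_INR; repeat destruct Rle_dec; lra).
  assert (Hx2 : X (S k) <= sqrt t) by (unfold X, Rmin; destruct Rle_dec; lra).
  destruct (circ_prim_increment_bounds t (X k) (X (S k)) Hp (proj1 Hx1) Hx12 Hx2) as [Lo Up].
  unfold D; fold (X k) (X (S k)). split.
  - eapply Rle_trans; [|exact Lo].
    destruct (Rle_dec (INR (S k)) (sqrt t)) as [h|h].
    + unfold X, Rmin. rewrite S_INR in *. repeat destruct Rle_dec; lra.
    + assert (~ (INR (S k) ^ 2 <= t))
        by (intro h2; apply pow2_le_iff_le_sqrt in h2; [lra|apply pos_INR|lra]).
      rewrite (sqrt_neg_0 (t - INR (S k) ^ 2)) by lra.
      apply Rmult_le_pos; [lra|apply sqrt_pos].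
  - eapply Rle_trans; [exact Up|].
    destruct (Rle_dec (INR k) (sqrt t)) as [h|h].
    + assert (E : X k = INR k) by (unfold X, Rmin; destruct Rle_dec; lra). rewrite E.
      rewrite <- (Rmult_1_l (sqrt (t - INR k ^ 2))) at 2.
      apply Rmult_le_compat_r; [apply sqrt_pos|].
      unfold X, Rmin. rewrite S_INR. destruct Rle_dec; lra.
    + assert (E1 : X k = sqrt t) by (unfold X, Rmin; destruct Rle_dec; lra).
      assert (E2 : X (S k) = sqrt t) by (unfold X, Rmin; rewrite S_INR; destruct Rle_dec; lra).
      rewrite E1, E2, Rminus_diag, Rmult_0_l. apply sqrt_pos.
Qed.

Lemma half_chord_sum_bounds t N : 0 <= t -> sqrt t <= INR N ->
  PI * t / 4 - sqrt t <= half_chord_sum t N <= PI * t / 4.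
Proof.
  intros Ht HN. destruct (Rle_lt_or_eq_dec _ _ Ht) as [Hp|<-].
  2:{ rewrite sqrt_0. unfold half_chord_sum.
      enough (sum_1n (fun k => sqrt (0 - INR k ^ 2)) N = 0) by lra.
      clear HN; induction N as [|N IH]; cbn [sum_1n]; [auto|].
      rewrite IH, sqrt_neg_0; [ring|]. pose proof (pow2_ge_0 (INR (S N))). lra. }
  set (D := fun j => circ_prim t (Rmin (INR j) (sqrt t))).
  assert (Tel : sum_1n (fun k => D k - D (pred k)) N = PI * t / 4).
  { rewrite sum_1n_telescope. unfold D.
    rewrite Rmin_right, Rmin_left by (simpl; auto using sqrt_pos).
    rewrite circ_prim_sqrt, circ_prim_0 by auto. ring. }
  assert (Step : forall k, (1 <= k)%nat ->
    sqrt (t - INR k ^ 2) <= D k - D (pred k) <= sqrt (t - INR (pred k) ^ 2)).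
  { intros [|k] Hk; [lia|]. apply circ_prim_clamped_step, Hp. }
  unfold half_chord_sum. split.
  - assert (sum_1n (fun k => D k - D (pred k)) N <= sum_1n (fun k => sqrt (t - INR (pred k) ^ 2)) N)
      by (apply sum_1n_le; intros; apply Step; lia).
    rewrite (sum_1n_pred (fun k => sqrt (t - INR k ^ 2))) in H. simpl INR in H.
    replace (t - 0 ^ 2) with t in H by ring.
    pose proof (sqrt_pos (t - INR N ^ 2)). lra.
  - assert (sum_1n (fun k => sqrt (t - INR k ^ 2)) N <= sum_1n (fun k => D k - D (pred k)) N)
      by (apply sum_1n_le; intros; apply Step; lia).
    lra.
Qed.

Lemma symsum_half_chord t N :
  symsum (fun a => sqrt (t - IZR a ^ 2)) N = sqrt t + 2 * half_chord_sum t N.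
Proof.
  rewrite symsum_split. unfold half_chord_sum. simpl IZR. replace (t - 0 ^ 2) with t by ring.
  f_equal. induction N as [|N IH]; cbn [sum_1n]; [ring|].
  rewrite IH, IZR_opp_of_nat_pow2, <- INR_IZR_INZ. ring.
Qed.

Definition disc_count (N : nat) (t : R) : R :=
  symsum (fun a => symsum (fun b => ind_le (IZR a ^ 2 + IZR b ^ 2) t) N) N.

(** Gauss' circle estimate: counting row by row, each row is [2 sqrt (t - a^2) + O(1)], and the
    half-chords sum to the area of the disc up to [O(sqrt t)]. *)
Lemma disc_count_approx N t : 0 <= t -> t <= INR N ^ 2 ->
  Rabs (disc_count N t - PI * t) <= 4 * sqrt t + 1.
Proof.
  intros H1 H2.
  assert (Hrow : forall a, Rabs (line_count N (t - IZR a ^ 2) - 2 * sqrt (t - IZR a ^ 2))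
                           <= ind_le (IZR a ^ 2) t).
  { intros a. unfold ind_le. destruct Rle_dec as [h|h].
    - pose proof (pow2_ge_0 (IZR a)).
      pose proof (line_count_approx N (t - IZR a ^ 2) ltac:(lra) ltac:(lra)). apply Rabs_le; lra.
    - rewrite line_count_neg, sqrt_neg_0 by lra.
      replace (0 - 2 * 0) with 0 by ring. rewrite Rabs_R0. lra. }
  assert (HA : Rabs (disc_count N t - 2 * symsum (fun a => sqrt (t - IZR a ^ 2)) N)
               <= line_count N t).
  { unfold disc_count. rewrite <- symsum_scal, <- symsum_minus. eapply Rle_trans; [apply symsum_abs|].
    apply symsum_le. intros a. eapply Rle_trans; [|apply Hrow]. right. do 3 f_equal.
    apply symsum_ext. intros b. unfold ind_le. repeat destruct Rle_dec; lra. }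
  assert (HN : sqrt t <= INR N)
    by (rewrite <- (sqrt_pow2 (INR N)) by apply pos_INR; apply sqrt_le_1_alt; auto).
  pose proof (half_chord_sum_bounds t N H1 HN).
  pose proof (line_count_between N t H1). pose proof (Rmin_r (INR N) (sqrt t)).
  rewrite symsum_half_chord in HA. apply Rabs_le. apply Rabs_le_between in HA. lra.
Qed.

(** * Abel summation over shells *)

Definition normsq (a b : Z) : R := IZR a ^ 2 + IZR b ^ 2.

Lemma normsq_INR a b : exists k : nat, normsq a b = INR k.
Proof.
  exists (Z.to_nat (a * a + b * b)). rewrite INR_IZR_INZ, Z2Nat.id by nia.
  unfold normsq. rewrite plus_IZR, !mult_IZR. ring.
Qed.

Lemma ind_le_INR k m : ind_le (INR k) (INR m) = if le_dec k m then 1 else 0.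
Proof.
  unfold ind_le. destruct Rle_dec as [h|h]; destruct le_dec as [h2|h2]; auto.
  - apply INR_le in h. lia.
  - apply le_INR in h2. lra.
Qed.

Lemma sum_lt_ind_telescope (v : nat -> R) k M :
  sum_lt (fun m => ind_le (INR k) (INR m) * (v m - v (S m))) M = v (Nat.min k M) - v M.
Proof.
  induction M as [|M IH]; cbn [sum_lt].
  - replace (Nat.min k 0) with 0%nat by lia. ring.
  - rewrite IH, ind_le_INR. destruct le_dec.
    + replace (Nat.min k (S M)) with k by lia. replace (Nat.min k M) with k by lia. ring.
    + replace (Nat.min k (S M)) with (S M) by lia. replace (Nat.min k M) with M by lia. ring.
Qed.

Lemma ind_le_telescope (g : R -> R) k M :
  ind_le (INR k) (INR M) * g (INR k) = ind_le (INR k) (INR M) * g (INR M)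
     + sum_lt (fun m => ind_le (INR k) (INR m) * (g (INR m) - g (INR (S m)))) M.
Proof.
  rewrite (sum_lt_ind_telescope (fun m => g (INR m))), ind_le_INR.
  destruct le_dec; [replace (Nat.min k M) with k|replace (Nat.min k M) with M]; try lia; ring.
Qed.

Lemma abel_summation_shells (g : R -> R) N M :
  symsum (fun a => symsum (fun b => ind_le (normsq a b) (INR M) * g (normsq a b)) N) N =
  disc_count N (INR M) * g (INR M)
  + sum_lt (fun m => disc_count N (INR m) * (g (INR m) - g (INR (S m)))) M.
Proof.
  rewrite (symsum_ext _ (fun a => symsum (fun b => ind_le (normsq a b) (INR M) * g (INR M)) N +
      sum_lt (fun m => symsum (fun b => ind_le (normsq a b) (INR m) * (g (INR m) - g (INR (S m)))) N) M)).
  2:{ intros a. rewrite <- symsum_sum_lt, <- symsum_plus. apply symsum_ext. intros b.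
      destruct (normsq_INR a b) as [k ->]. apply ind_le_telescope. }
  rewrite symsum_plus, symsum_sum_lt. unfold disc_count. f_equal.
  - rewrite Rmult_comm, <- symsum_scal. apply symsum_ext. intros a.
    rewrite <- symsum_scal. apply symsum_ext. intros b. unfold normsq. ring.
  - apply sum_lt_ext. intros m _.
    rewrite Rmult_comm, <- symsum_scal. apply symsum_ext. intros a.
    rewrite <- symsum_scal. apply symsum_ext. intros b. unfold normsq. ring.
Qed.

Lemma disc_count_floor N m x : INR m <= x < INR m + 1 -> disc_count N x = disc_count N (INR m).
Proof.
  intros Hx. unfold disc_count. apply symsum_ext. intros a. apply symsum_ext. intros b.
  destruct (normsq_INR a b) as [k Hk]. unfold normsq in Hk. rewrite Hk.
  unfold ind_le. destruct Rle_dec as [h|h]; destruct Rle_dec as [h'|h']; auto; [|lra].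
  exfalso. apply h'. assert (INR k < INR (S m)) by (rewrite S_INR; lra).
  apply INR_lt in H. apply le_INR. lia.
Qed.

(** * Comparing the shell sum with an integral *)

Lemma abel_step_error (A : R) (v dv P W dW : R -> R) (al be : R) :
  al <= be ->
  (forall x, al <= x <= be -> is_derive v x (dv x)) ->
  (forall x, al <= x <= be -> is_derive P x (- PI * x ^ 2 * dv x)) ->
  (forall x, al <= x <= be -> is_derive W x (dW x)) ->
  (forall x, al < x < be ->
     (4 * x + 1) * Rabs (dv x) <= dW x /\ Rabs (A - PI * x ^ 2) <= 4 * x + 1) ->
  Rabs (A * (v al - v be) - (P be - P al)) <= W be - W al.
Proof.
  intros Hab Hv HP HW Hi.
  assert (Key : forall x, al < x < be -> - dW x <= (A - PI * x ^ 2) * dv x <= dW x).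
  { intros x Hx. apply Rabs_le_between. destruct (Hi x Hx) as [I1 I2]. rewrite Rabs_mult.
    eapply Rle_trans; [|exact I1]. apply Rmult_le_compat_r; [apply Rabs_pos|auto]. }
  assert (M1 : - A * v al - P al + W al <= - A * v be - P be + W be).
  { apply (le_of_derive_nonneg (fun x => - A * v x - P x + W x)
      (fun x => - A * dv x - (- PI * x ^ 2 * dv x) + dW x)); auto.
    - intros x Hx. apply (is_derive_plus (fun x => - A * v x - P x) W); [|apply HW; auto].
      apply (is_derive_minus (fun x => - A * v x) P); [|apply HP; auto].
      apply (is_derive_scal v), Hv; auto.
    - intros x Hx. pose proof (Key x Hx). lra. }
  assert (M2 : A * v al + P al + W al <= A * v be + P be + W be).
  { apply (le_of_derive_nonneg (fun x => A * v x + P x + W x)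
      (fun x => A * dv x + (- PI * x ^ 2 * dv x) + dW x)); auto.
    - intros x Hx. apply (is_derive_plus (fun x => A * v x + P x) W); [|apply HW; auto].
      apply (is_derive_plus (fun x => A * v x) P); [|apply HP; auto].
      apply (is_derive_scal v), Hv; auto.
    - intros x Hx. pose proof (Key x Hx). lra. }
  apply Rabs_le. lra.
Qed.

(** The summand of [G_term] at radius [x] is [g_in k x] inside the Fermi ball and [g_out k tau x]
    outside.  [area_in]/[area_out] are the primitives [P] of [abel_step_error] for them, and
    [err_in]/[err_out] the majorants [W]; [inv_prim] is a primitive of [1 / (k^2 x^2 + tau)]
    when [tau > 0] and of a larger function otherwise. *)

Definition g_in (k x : R) : R := / (k ^ 2 * x ^ 2 + 1).
Definition g_out (k tau x : R) : R := / (k ^ 2 * x ^ 2 + 1) - / (k ^ 2 * x ^ 2 + tau).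
Definition dg_in (k x : R) : R := - (2 * k ^ 2 * x) / (k ^ 2 * x ^ 2 + 1) ^ 2.
Definition dg_out (k tau x : R) : R :=
  - (2 * k ^ 2 * x) / (k ^ 2 * x ^ 2 + 1) ^ 2 + (2 * k ^ 2 * x) / (k ^ 2 * x ^ 2 + tau) ^ 2.

Definition area_in (k x : R) : R :=
  - PI * x ^ 2 * g_in k x + PI / k ^ 2 * ln (k ^ 2 * x ^ 2 + 1).
Definition area_out (k mu tau x : R) : R :=
  - PI * x ^ 2 * g_out k tau x
  + PI / k ^ 2 * (ln (k ^ 2 * x ^ 2 + 1) - ln (k ^ 2 * x ^ 2 + tau) + ln (mu + tau)).

Definition err_atan (k x : R) : R := 4 * (- x / (k ^ 2 * x ^ 2 + 1) + atan (k * x) / k).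
Definition derr_atan (k x : R) : R := 8 * k ^ 2 * x ^ 2 / (k ^ 2 * x ^ 2 + 1) ^ 2.
Definition err_in (k x : R) : R := err_atan k x + 1 - g_in k x.

Definition inv_prim (k tau x : R) : R :=
  if Rlt_dec 0 tau then atan (k * x / sqrt tau) / (k * sqrt tau)
  else - / (k * sqrt (k ^ 2 * x ^ 2 + tau)).
Definition dinv_prim (k tau x : R) : R :=
  if Rlt_dec 0 tau then / (k ^ 2 * x ^ 2 + tau)
  else k * x / ((k ^ 2 * x ^ 2 + tau) * sqrt (k ^ 2 * x ^ 2 + tau)).

Definition err_out (k tau x : R) : R :=
  if Rle_dec 1 tau then err_atan k x - g_out k tau x
  else 4 * (- x / (k ^ 2 * x ^ 2 + tau) + inv_prim k tau x) + g_out k tau x.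
Definition derr_out (k tau x : R) : R :=
  if Rle_dec 1 tau then derr_atan k x - dg_out k tau x
  else 4 * ((- / (k ^ 2 * x ^ 2 + tau) + 2 * k ^ 2 * x ^ 2 / (k ^ 2 * x ^ 2 + tau) ^ 2)
            + dinv_prim k tau x) + dg_out k tau x.

Lemma g_in_derive k x : is_derive (g_in k) x (dg_in k x).
Proof.
  unfold g_in, dg_in. pose proof (pow2_ge_0 (k * x)).
  auto_derive; [nra|field; nra].
Qed.

Lemma g_out_derive k tau x : 0 < k ^ 2 * x ^ 2 + tau -> is_derive (g_out k tau) x (dg_out k tau x).
Proof.
  intros H. unfold g_out, dg_out. pose proof (pow2_ge_0 (k * x)).
  auto_derive; [split; nra|field; split; nra].
Qed.

Lemma area_in_derive k x : 0 < k -> is_derive (area_in k) x (- PI * x ^ 2 * dg_in k x).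
Proof.
  intros Hk. unfold area_in, g_in, dg_in. pose proof (pow2_ge_0 (k * x)).
  auto_derive; [repeat split; nra|field; split; nra].
Qed.

Lemma area_out_derive k mu tau x : 0 < k -> 0 < k ^ 2 * x ^ 2 + tau ->
  is_derive (area_out k mu tau) x (- PI * x ^ 2 * dg_out k tau x).
Proof.
  intros Hk H. unfold area_out, g_out, dg_out. pose proof (pow2_ge_0 (k * x)).
  auto_derive; [repeat split; nra|field; repeat split; nra].
Qed.

Lemma err_atan_derive k x : 0 < k -> is_derive (err_atan k) x (derr_atan k x).
Proof.
  intros Hk. unfold err_atan, derr_atan. pose proof (pow2_ge_0 (k * x)).
  auto_derive; [repeat split; nra|field; repeat split; nra].
Qed.

Lemma err_in_derive k x : 0 < k -> is_derive (err_in k) x (derr_atan k x - dg_in k x).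
Proof.
  intros Hk. unfold err_in, err_atan, g_in, derr_atan, dg_in. pose proof (pow2_ge_0 (k * x)).
  auto_derive; [repeat split; nra|field; repeat split; nra].
Qed.

Lemma atan_scaled_derive k s x : 0 < k -> 0 < s ->
  is_derive (fun x => atan (k * x / s) / (k * s)) x (/ (k ^ 2 * x ^ 2 + s ^ 2)).
Proof.
  intros Hk Hs. pose proof (pow2_ge_0 (k * x)). auto_derive.
  - repeat split; nra.
  - unfold Rsqr. change RinvImpl.Rinv with Rinv. field. split; [nra|split; [lra|]].
    assert (0 < s * s + k * x * (k * x)) by nra.
    intro E. field_simplify in E; nra.
Qed.

Lemma inv_prim_derive k tau x : 0 < k -> 0 < k ^ 2 * x ^ 2 + tau ->
  is_derive (inv_prim k tau) x (dinv_prim k tau x).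
Proof.
  intros Hk H. unfold inv_prim, dinv_prim. destruct (Rlt_dec 0 tau) as [h|h].
  - pose proof (atan_scaled_derive k (sqrt tau) x Hk (sqrt_lt_R0 _ h)) as D.
    rewrite pow2_sqrt in D by lra. exact D.
  - pose proof (sqrt_lt_R0 _ H). auto_derive.
    + repeat split; auto. apply Rgt_not_eq, Rmult_lt_0_compat; auto.
    + replace (k * (k * 1) * (x * (x * 1)) + tau) with (k ^ 2 * x ^ 2 + tau) by ring.
      set (r := sqrt (k ^ 2 * x ^ 2 + tau)) in *.
      assert (E : k ^ 2 * x ^ 2 + tau = r * r) by (unfold r; rewrite sqrt_sqrt; lra).
      clearbody r. rewrite E. field. lra.
Qed.

Lemma err_out_derive k tau x : 0 < k -> 0 < k ^ 2 * x ^ 2 + tau ->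
  is_derive (err_out k tau) x (derr_out k tau x).
Proof.
  intros Hk H. unfold err_out, derr_out. destruct (Rle_dec 1 tau) as [h|h].
  - apply (is_derive_minus (err_atan k) (g_out k tau));
      [apply err_atan_derive|apply g_out_derive]; auto.
  - apply (is_derive_plus (fun x => 4 * (- x / (k ^ 2 * x ^ 2 + tau) + inv_prim k tau x))
      (g_out k tau)); [|apply g_out_derive; auto].
    apply (is_derive_scal (fun x => - x / (k ^ 2 * x ^ 2 + tau) + inv_prim k tau x)).
    apply (is_derive_plus (fun x => - x / (k ^ 2 * x ^ 2 + tau)) (inv_prim k tau));
      [|apply inv_prim_derive; auto].
    auto_derive; [lra|field; lra].
Qed.

Lemma err_in_dominates k x : 0 < k -> 0 <= x ->
  (4 * x + 1) * Rabs (dg_in k x) <= derr_atan k x - dg_in k x.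
Proof.
  intros Hk Hx. pose proof (pow2_ge_0 (k * x)).
  set (p := / (k ^ 2 * x ^ 2 + 1)).
  assert (Hp : 0 < p) by (unfold p; apply Rinv_0_lt_compat; nra).
  assert (E1 : dg_in k x = - (2 * k ^ 2 * x) * p ^ 2) by (unfold dg_in, p; field; nra).
  assert (E2 : derr_atan k x = 8 * k ^ 2 * x ^ 2 * p ^ 2) by (unfold derr_atan, p; field; nra).
  assert (0 <= 2 * k ^ 2 * x * p ^ 2) by (apply Rmult_le_pos; nra).
  rewrite E1, E2, Rabs_left1; nra.
Qed.

Lemma dinv_prim_ge k tau x : 0 < k -> 0 <= x -> 0 < k ^ 2 * x ^ 2 + tau ->
  / (k ^ 2 * x ^ 2 + tau) <= dinv_prim k tau x.
Proof.
  intros Hk Hx H. unfold dinv_prim. destruct Rlt_dec; [lra|].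
  pose proof (sqrt_lt_R0 _ H). set (r := sqrt (k ^ 2 * x ^ 2 + tau)) in *.
  assert (E : k ^ 2 * x ^ 2 + tau = r * r) by (unfold r; rewrite sqrt_sqrt; lra).
  clearbody r. assert (0 <= k * x) by nra. assert (r * r <= (k * x) * (k * x)) by (rewrite <- E; nra).
  rewrite E in *. assert (r <= k * x) by nra.
  apply Rmult_le_reg_r with (r * r * r); [nra|].
  replace (/ (r * r) * (r * r * r)) with r by (field; lra).
  replace (k * x / (r * r * r) * (r * r * r)) with (k * x) by (field; lra). lra.
Qed.

Lemma err_out_dominates k tau x : 0 < k -> 0 <= x -> 0 < k ^ 2 * x ^ 2 + tau ->
  (4 * x + 1) * Rabs (dg_out k tau x) <= derr_out k tau x.
Proof.
  intros Hk Hx H. pose proof (pow2_ge_0 (k * x)).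
  set (p := / (k ^ 2 * x ^ 2 + 1)). set (q := / (k ^ 2 * x ^ 2 + tau)).
  assert (Hp : 0 < p) by (unfold p; apply Rinv_0_lt_compat; nra).
  assert (Hq : 0 < q) by (unfold q; apply Rinv_0_lt_compat; nra).
  assert (E1 : dg_out k tau x = 2 * k ^ 2 * x * (q ^ 2 - p ^ 2)) by (unfold dg_out, p, q; field; nra).
  assert (Hkx : 0 <= 2 * k ^ 2 * x) by nra.
  unfold derr_out. rewrite E1. destruct (Rle_dec 1 tau) as [h|h].
  - assert (q <= p) by (unfold p, q; apply Rinv_le_contravar; nra).
    assert (E2 : derr_atan k x = 8 * k ^ 2 * x ^ 2 * p ^ 2) by (unfold derr_atan, p; field; nra).
    assert (0 <= 2 * k ^ 2 * x * (p ^ 2 - q ^ 2)) by (apply Rmult_le_pos; nra).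
    assert (0 <= x * (2 * k ^ 2 * x * q ^ 2)) by (apply Rmult_le_pos; nra).
    rewrite E2, Rabs_left1; nra.
  - assert (p <= q) by (unfold p, q; apply Rinv_le_contravar; nra).
    pose proof (dinv_prim_ge k tau x Hk Hx H) as HB. fold q in HB.
    replace (2 * k ^ 2 * x ^ 2 / (k ^ 2 * x ^ 2 + tau) ^ 2) with (2 * k ^ 2 * x ^ 2 * q ^ 2)
      by (unfold q; field; nra).
    fold q. assert (0 <= 2 * k ^ 2 * x * (q ^ 2 - p ^ 2)) by (apply Rmult_le_pos; nra).
    assert (0 <= x * (2 * k ^ 2 * x * p ^ 2)) by (apply Rmult_le_pos; nra).
    rewrite Rabs_right by lra. nra.
Qed.

(** [x_mu k mu] is the radius of the Fermi ball [k^2 x^2 = mu]; across it the profile jumps by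
    [1 / (mu + tau)], which costs [jump_err] in the comparison. *)

Definition x_mu (k mu : R) : R := sqrt (mu / k ^ 2).
Definition jump_err (k mu tau : R) : R := (4 * x_mu k mu + 1) / (mu + tau).

Definition area_prim (k mu tau x : R) : R :=
  if Rle_dec x (x_mu k mu) then area_in k x else area_out k mu tau x.
Definition err_prim (k mu tau x : R) : R :=
  if Rle_dec x (x_mu k mu) then err_in k x
  else err_in k (x_mu k mu) + jump_err k mu tau + (err_out k tau x - err_out k tau (x_mu k mu)).

Definition shell_val (k mu tau c : R) : R :=
  / (k ^ 2 * c + 1) - chi_gt mu (k ^ 2 * c) / (k ^ 2 * c + tau).

Lemma x_mu_spec k mu : 0 < k -> 0 < mu -> 0 < x_mu k mu /\ k ^ 2 * x_mu k mu ^ 2 = mu.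
Proof.
  intros Hk Hm. assert (0 < mu / k ^ 2) by (apply Rdiv_lt_0_compat; nra).
  unfold x_mu. split; [apply sqrt_lt_R0; auto|]. rewrite pow2_sqrt by lra. field. lra.
Qed.

Lemma le_x_mu_iff k mu x : 0 < k -> 0 < mu -> 0 <= x -> (x <= x_mu k mu <-> k ^ 2 * x ^ 2 <= mu).
Proof.
  intros Hk Hm Hx. destruct (x_mu_spec k mu Hk Hm) as [H1 H2]. set (y := x_mu k mu) in *.
  split; intros.
  - assert (x ^ 2 <= y ^ 2) by nra. nra.
  - destruct (Rle_or_lt x y); auto. assert (y ^ 2 < x ^ 2) by nra. nra.
Qed.

Lemma shell_val_in k mu tau x : 0 < k -> 0 < mu -> 0 <= x -> x <= x_mu k mu ->
  shell_val k mu tau (x ^ 2) = g_in k x.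
Proof.
  intros Hk Hm Hx H. apply le_x_mu_iff in H; auto. unfold shell_val, g_in, chi_gt.
  destruct Rlt_dec; [lra|]. unfold Rdiv. ring.
Qed.

Lemma shell_val_out k mu tau x : 0 < k -> 0 < mu -> 0 <= x -> x_mu k mu < x ->
  shell_val k mu tau (x ^ 2) = g_out k tau x.
Proof.
  intros Hk Hm Hx H. assert (~ (k ^ 2 * x ^ 2 <= mu)) by (rewrite <- le_x_mu_iff; auto; lra).
  unfold shell_val, g_out, chi_gt. destruct Rlt_dec; [|lra]. unfold Rdiv. ring.
Qed.

Lemma pow2_sqrt_INR m : sqrt (INR m) ^ 2 = INR m.
Proof. apply pow2_sqrt, pos_INR. Qed.

Lemma disc_count_approx_shell N m x : (S m <= N * N)%nat ->
  sqrt (INR m) <= x < sqrt (INR (S m)) -> Rabs (disc_count N (INR m) - PI * x ^ 2) <= 4 * x + 1.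
Proof.
  intros HN Hx. pose proof (sqrt_pos (INR m)).
  assert (E1 : INR m <= x ^ 2) by (rewrite <- (pow2_sqrt_INR m); nra).
  assert (E2 : x ^ 2 < INR m + 1) by (rewrite <- S_INR, <- (pow2_sqrt_INR (S m)); nra).
  rewrite <- (disc_count_floor N m (x ^ 2)) by lra.
  replace (4 * x + 1) with (4 * sqrt (x ^ 2) + 1) by (rewrite sqrt_pow2; lra).
  apply le_INR in HN. rewrite mult_INR, S_INR in HN.
  apply disc_count_approx; nra.
Qed.

Section AbelSteps.

Variables (k mu tau : R) (N m : nat).
Hypotheses (Hk : 0 < k) (Hmu : 0 < mu) (Htau : - mu < tau) (HN : (S m <= N * N)%nat).
Let A := disc_count N (INR m).

Lemma abel_step_in a b : sqrt (INR m) <= a -> a <= b -> b <= sqrt (INR (S m)) -> b <= x_mu k mu ->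
  Rabs (A * (g_in k a - g_in k b) - (area_in k b - area_in k a)) <= err_in k b - err_in k a.
Proof.
  intros H1 H2 H3 H4. pose proof (sqrt_pos (INR m)).
  apply (abel_step_error A (g_in k) (dg_in k) (area_in k) (err_in k)
    (fun x => derr_atan k x - dg_in k x)); auto.
  - intros; apply g_in_derive.
  - intros; apply area_in_derive; auto.
  - intros; apply err_in_derive; auto.
  - intros x Hx. split; [apply err_in_dominates; auto; lra|].
    apply disc_count_approx_shell; auto; lra.
Qed.

Lemma abel_step_out a b : sqrt (INR m) <= a -> a <= b -> b <= sqrt (INR (S m)) -> x_mu k mu <= a ->
  Rabs (A * (g_out k tau a - g_out k tau b) - (area_out k mu tau b - area_out k mu tau a))
  <= err_out k tau b - err_out k tau a.
Proof.
  intros H1 H2 H3 H4. pose proof (sqrt_pos (INR m)).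
  destruct (x_mu_spec k mu Hk Hmu) as [X1 X2].
  assert (Hpos : forall x, a <= x <= b -> 0 < k ^ 2 * x ^ 2 + tau)
    by (intros x Hx; assert (x_mu k mu ^ 2 <= x ^ 2) by nra; nra).
  apply (abel_step_error A (g_out k tau) (dg_out k tau) (area_out k mu tau) (err_out k tau)
    (derr_out k tau)); auto.
  - intros; apply g_out_derive; auto.
  - intros; apply area_out_derive; auto.
  - intros; apply err_out_derive; auto.
  - intros x Hx. split; [apply err_out_dominates; auto; [lra|apply Hpos; lra]|].
    apply disc_count_approx_shell; auto; lra.
Qed.

(** A shell that straddles the Fermi ball is cut at [x_mu]; the jump of the profile there
    is matched by the jump [PI x_mu^2 / (mu + tau)] of the primitive. *)
Lemma abel_step_crossing al be : sqrt (INR m) = al -> be = sqrt (INR (S m)) ->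
  al <= x_mu k mu < be ->
  Rabs (A * (g_in k al - g_out k tau be) - (area_out k mu tau be - area_in k al))
  <= err_in k (x_mu k mu) + jump_err k mu tau + (err_out k tau be - err_out k tau (x_mu k mu))
     - err_in k al.
Proof.
  intros Ha Hb Hy. destruct (x_mu_spec k mu Hk Hmu) as [X1 X2]. set (y := x_mu k mu) in *.
  pose proof (abel_step_in al y ltac:(lra) ltac:(lra) ltac:(lra) (Rle_refl _)) as S1.
  pose proof (abel_step_out y be ltac:(lra) ltac:(lra) ltac:(lra) (Rle_refl _)) as S3.
  assert (S2 : Rabs ((A - PI * y ^ 2) / (mu + tau)) <= jump_err k mu tau).
  { unfold jump_err, Rdiv. fold y. rewrite Rabs_mult, (Rabs_right (/ (mu + tau)))
      by (left; apply Rinv_0_lt_compat; lra).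
    apply Rmult_le_compat_r; [left; apply Rinv_0_lt_compat; lra|].
    apply disc_count_approx_shell; auto; lra. }
  assert (Ej : g_in k y = g_out k tau y + / (mu + tau)) by (unfold g_in, g_out; rewrite X2; ring).
  assert (EP : area_out k mu tau y = area_in k y + PI * y ^ 2 / (mu + tau)).
  { unfold area_out, area_in. rewrite X2, Ej. field. lra. }
  replace (A * (g_in k al - g_out k tau be) - (area_out k mu tau be - area_in k al)) with
    ((A * (g_in k al - g_in k y) - (area_in k y - area_in k al)) + (A - PI * y ^ 2) / (mu + tau)
     + (A * (g_out k tau y - g_out k tau be) - (area_out k mu tau be - area_out k mu tau y)))
    by (rewrite EP, Ej; field; lra).
  eapply Rle_trans; [apply Rabs_triang|].
  eapply Rle_trans; [apply Rplus_le_compat_r, Rabs_triang|]. lra.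
Qed.

Lemma abel_step :
  Rabs (A * (shell_val k mu tau (INR m) - shell_val k mu tau (INR (S m)))
        - (area_prim k mu tau (sqrt (INR (S m))) - area_prim k mu tau (sqrt (INR m))))
  <= err_prim k mu tau (sqrt (INR (S m))) - err_prim k mu tau (sqrt (INR m)).
Proof.
  set (al := sqrt (INR m)). set (be := sqrt (INR (S m))).
  assert (Ea : sqrt (INR m) = al) by reflexivity.
  assert (Eb : be = sqrt (INR (S m))) by reflexivity.
  assert (Hal : 0 <= al) by apply sqrt_pos.
  assert (Hab : al < be) by (apply sqrt_lt_1; [apply pos_INR|apply pos_INR|rewrite S_INR; lra]).
  rewrite <- (pow2_sqrt_INR m), <- (pow2_sqrt_INR (S m)). fold al be.
  unfold area_prim, err_prim.
  destruct (Rle_dec be (x_mu k mu)) as [hb|hb]; destruct (Rle_dec al (x_mu k mu)) as [ha|ha];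
    try lra.
  - rewrite !shell_val_in by (auto; lra). apply abel_step_in; lra.
  - rewrite shell_val_in, shell_val_out by (auto; lra). apply abel_step_crossing; auto; lra.
  - rewrite !shell_val_out by (auto; lra).
    pose proof (abel_step_out al be ltac:(lra) ltac:(lra) ltac:(lra) ltac:(lra)). lra.
Qed.

End AbelSteps.

(** * The error budget *)

Lemma jordan_ineq th : 0 <= th <= PI / 2 -> 2 * th / PI <= sin th.
Proof.
  intros Hth. pose proof PI2_3_2. pose proof PI_4.
  destruct (Rle_or_lt th 1) as [h|h].
  - destruct (sin_bound th 0 ltac:(lra) ltac:(lra)) as [L _].
    unfold sin_approx, sin_term in L. simpl in L.
    assert (2 * th / PI <= th * (5 / 6)).
    { apply Rmult_le_reg_r with PI; [lra|]. unfold Rdiv. rewrite Rmult_assoc, Rinv_l by lra. nra. }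
    nra.
  - set (d := PI / 2 - th).
    destruct (cos_bound d 0 ltac:(unfold d; lra) ltac:(unfold d; lra)) as [L _].
    unfold cos_approx, cos_term in L. simpl in L.
    replace (sin th) with (cos d) by (unfold d; rewrite cos_shift; auto).
    assert (2 * th / PI = 1 - 2 * d / PI) by (unfold d; field; lra).
    assert (d * d / 2 <= 2 * d / PI).
    { assert (0 <= d) by (unfold d; lra).
      assert (d * PI <= 4) by (unfold d; nra).
      apply Rmult_le_reg_r with PI; [lra|].
      replace (2 * d / PI * PI) with (2 * d) by (field; lra).
      replace (d * d / 2 * PI) with (d * (d * PI) / 2) by field. nra. }
    lra.
Qed.

Lemma PI2_minus_atan_le z : 0 <= z -> PI / 2 - atan z <= PI / 2 / sqrt (1 + z ^ 2).
Proof.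
  intros Hz. pose proof PI_RGT_0.
  assert (Hth : 0 <= PI / 2 - atan z <= PI / 2).
  { pose proof (atan_bound z). destruct (Req_dec z 0) as [->|]; [rewrite atan_0; lra|].
    pose proof (atan_increasing 0 z ltac:(lra)). rewrite atan_0 in *. lra. }
  assert (Hsin : sin (PI / 2 - atan z) = / sqrt (1 + z ^ 2)).
  { rewrite sin_shift, cos_atan. unfold Rsqr, Rdiv. rewrite Rmult_1_l. do 2 f_equal. ring. }
  pose proof (jordan_ineq _ Hth) as J. rewrite Hsin in J.
  assert (Hq : 0 < sqrt (1 + z ^ 2)) by (apply sqrt_lt_R0; nra).
  apply Rmult_le_reg_r with (2 / PI * sqrt (1 + z ^ 2)); [apply Rmult_lt_0_compat; auto; apply Rdiv_lt_0_compat; lra|].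
  replace (PI / 2 / sqrt (1 + z ^ 2) * (2 / PI * sqrt (1 + z ^ 2))) with 1 by (field; lra).
  apply Rmult_le_compat_r with (r := sqrt (1 + z ^ 2)) in J; [|lra].
  rewrite Rinv_l in J by lra. nra.
Qed.

Lemma inv_prim_increment_le k mu tau X : 0 < k -> 0 < mu -> - mu < tau -> x_mu k mu <= X ->
  inv_prim k tau X - inv_prim k tau (x_mu k mu) <= PI / 2 / (k * sqrt (mu + tau)).
Proof.
  intros Hk Hm Ht HX. destruct (x_mu_spec k mu Hk Hm) as [X1 X2]. pose proof PI_RGT_0.
  set (y := x_mu k mu) in *.
  pose proof (sqrt_lt_R0 (mu + tau) ltac:(lra)) as Hmt.
  unfold inv_prim. destruct (Rlt_dec 0 tau) as [h|h].
  - pose proof (sqrt_lt_R0 _ h) as Hs. set (s := sqrt tau) in *.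
    assert (Es : tau = s ^ 2) by (unfold s; rewrite pow2_sqrt; lra).
    assert (Hz : 0 <= k * y / s) by (apply Rdiv_le_0_compat; nra).
    pose proof (PI2_minus_atan_le _ Hz) as T. pose proof (atan_bound (k * X / s)).
    assert (E : s * sqrt (1 + (k * y / s) ^ 2) = sqrt (mu + tau)).
    { rewrite <- (sqrt_pow2 s) at 1 by lra. rewrite <- sqrt_mult_alt by nra.
      f_equal. rewrite Es, <- X2. field. lra. }
    assert (Hq : 0 < sqrt (1 + (k * y / s) ^ 2)) by (apply sqrt_lt_R0; nra).
    apply Rle_trans with ((PI / 2 - atan (k * y / s)) / (k * s)).
    + unfold Rdiv. rewrite <- Rmult_minus_distr_r.
      apply Rmult_le_compat_r; [left; apply Rinv_0_lt_compat; nra|]. lra.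
    + rewrite <- E. apply Rmult_le_reg_r with (k * s); [nra|].
      replace ((PI / 2 - atan (k * y / s)) / (k * s) * (k * s)) with (PI / 2 - atan (k * y / s))
        by (field; lra).
      replace (PI / 2 / (k * (s * sqrt (1 + (k * y / s) ^ 2))) * (k * s))
        with (PI / 2 / sqrt (1 + (k * y / s) ^ 2)) by (field; lra). exact T.
  - replace (k ^ 2 * y ^ 2 + tau) with (mu + tau) by lra.
    assert (0 < k ^ 2 * X ^ 2 + tau) by (assert (y ^ 2 <= X ^ 2) by nra; nra).
    assert (0 < / (k * sqrt (k ^ 2 * X ^ 2 + tau)))
      by (apply Rinv_0_lt_compat, Rmult_lt_0_compat; auto; apply sqrt_lt_R0; auto).
    assert (/ (k * sqrt (mu + tau)) <= PI / 2 / (k * sqrt (mu + tau))).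
    { unfold Rdiv. rewrite <- (Rmult_1_l (/ (k * sqrt (mu + tau)))) at 1.
      apply Rmult_le_compat_r; [left; apply Rinv_0_lt_compat; nra|]. pose proof PI2_3_2. lra. }
    lra.
Qed.

Lemma err_atan_le k x : 0 < k -> 0 <= x -> err_atan k x <= 2 * PI / k.
Proof.
  intros Hk Hx. unfold err_atan. pose proof (atan_bound (k * x)). pose proof (pow2_ge_0 (k * x)).
  assert (0 <= x / (k ^ 2 * x ^ 2 + 1)) by (apply Rdiv_le_0_compat; nra).
  assert (atan (k * x) / k <= PI / 2 / k)
    by (unfold Rdiv; apply Rmult_le_compat_r; [left; apply Rinv_0_lt_compat|]; lra).
  replace (2 * PI / k) with (4 * (PI / 2 / k)) by (field; lra).
  unfold Rdiv in *. lra.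
Qed.

(** [mu + min tau 1] is the smallest denominator met in the error terms: it equals
    [mu + 1] when [tau >= 1] and [mu + tau] otherwise. *)
Lemma g_out_x_mu_le k mu tau : 0 < k -> 0 < mu -> - mu < tau ->
  Rabs (g_out k tau (x_mu k mu)) <= / (mu + Rmin tau 1).
Proof.
  intros Hk Hm Ht. destruct (x_mu_spec k mu Hk Hm) as [_ X2].
  unfold g_out. rewrite X2.
  replace (/ (mu + 1) - / (mu + tau)) with ((tau - 1) / ((mu + 1) * (mu + tau))) by (field; lra).
  unfold Rdiv. rewrite Rabs_mult, (Rabs_right (/ _)) by (left; apply Rinv_0_lt_compat; nra).
  unfold Rmin. destruct Rle_dec.
  - replace (/ (mu + tau)) with ((mu + 1) * / ((mu + 1) * (mu + tau))) by (field; lra).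
    apply Rmult_le_compat_r; [left; apply Rinv_0_lt_compat; nra|].
    rewrite Rabs_left1 by lra. lra.
  - replace (/ (mu + 1)) with ((mu + tau) * / ((mu + 1) * (mu + tau))) by (field; lra).
    apply Rmult_le_compat_r; [left; apply Rinv_0_lt_compat; nra|].
    rewrite Rabs_right by lra. lra.
Qed.

Lemma err_out_increment_le k mu tau X : 0 < k -> 0 < mu -> - mu < tau -> x_mu k mu < X ->
  let a := mu + Rmin tau 1 in
  err_atan k (x_mu k mu) + (err_out k tau X - err_out k tau (x_mu k mu))
  <= 2 * PI / k * (1 + / sqrt a) + 4 * x_mu k mu / a + / a.
Proof.
  intros Hk Hm Ht HX a. destruct (x_mu_spec k mu Hk Hm) as [X1 X2]. pose proof PI_RGT_0.
  set (y := x_mu k mu) in *.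
  assert (Ha0 : 0 < a) by (unfold a, Rmin; destruct Rle_dec; lra).
  assert (Hsa : 0 < / sqrt a) by (apply Rinv_0_lt_compat, sqrt_lt_R0; auto).
  assert (0 <= 2 * PI / k * / sqrt a) by (apply Rmult_le_pos; [apply Rdiv_le_0_compat|]; lra).
  assert (0 <= y / a) by (apply Rdiv_le_0_compat; lra).
  pose proof (g_out_x_mu_le k mu tau Hk Hm Ht) as Hg. fold y a in Hg.
  pose proof (Rle_abs (g_out k tau y)). pose proof (Rabs_Ropp (g_out k tau y)).
  pose proof (Rle_abs (- g_out k tau y)).
  assert (HkX : 0 < k ^ 2 * X ^ 2 + tau) by (assert (y ^ 2 <= X ^ 2) by nra; nra).
  unfold err_out. destruct (Rle_dec 1 tau) as [h|h].
  - assert (0 <= g_out k tau X).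
    { unfold g_out. enough (/ (k ^ 2 * X ^ 2 + tau) <= / (k ^ 2 * X ^ 2 + 1)) by lra.
      apply Rinv_le_contravar; nra. }
    pose proof (err_atan_le k X Hk ltac:(lra)). unfold Rdiv in *. nra.
  - assert (g_out k tau X <= 0).
    { unfold g_out. enough (/ (k ^ 2 * X ^ 2 + 1) <= / (k ^ 2 * X ^ 2 + tau)) by lra.
      apply Rinv_le_contravar; nra. }
    pose proof (err_atan_le k y Hk ltac:(lra)).
    pose proof (inv_prim_increment_le k mu tau X Hk Hm Ht (Rlt_le _ _ HX)) as HB. fold y in HB.
    assert (Ea : a = mu + tau) by (unfold a, Rmin; destruct Rle_dec; lra).
    rewrite <- Ea in HB.
    replace (PI / 2 / (k * sqrt a)) with (2 * PI / k * / sqrt a / 4) in HB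
      by (field; split; [apply Rgt_not_eq, sqrt_lt_R0|]; lra).
    assert (0 <= X / (k ^ 2 * X ^ 2 + tau)) by (apply Rdiv_le_0_compat; lra).
    replace (- y / (k ^ 2 * y ^ 2 + tau)) with (- (y / a)) by (rewrite X2, Ea; field; lra).
    replace (- X / (k ^ 2 * X ^ 2 + tau)) with (- (X / (k ^ 2 * X ^ 2 + tau))) by (field; lra).
    unfold Rdiv in *. nra.
Qed.

Definition err_total (k mu tau : R) : R :=
  let a := mu + Rmin tau 1 in
  2 * PI / k * (1 + / sqrt a) + 1 + 2 / a + 8 * x_mu k mu / a.

Lemma err_prim_increment_le k mu tau X : 0 < k -> 0 < mu -> - mu < tau -> x_mu k mu < X ->
  err_prim k mu tau X - err_prim k mu tau 0 <= err_total k mu tau.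
Proof.
  intros Hk Hm Ht HX. destruct (x_mu_spec k mu Hk Hm) as [X1 X2].
  pose proof (err_out_increment_le k mu tau X Hk Hm Ht HX) as HW. cbv zeta in HW.
  unfold err_prim, err_total. destruct (Rle_dec 0 (x_mu k mu)) as [_|h]; [|lra].
  destruct (Rle_dec X (x_mu k mu)) as [h|_]; [lra|].
  set (y := x_mu k mu) in *. set (a := mu + Rmin tau 1) in *.
  assert (Ha0 : 0 < a) by (unfold a, Rmin; destruct Rle_dec; lra).
  assert (W0 : err_in k 0 = 0)
    by (unfold err_in, err_atan, g_in; rewrite Rmult_0_r, atan_0; field; lra).
  assert (HJ : jump_err k mu tau <= (4 * y + 1) / a).
  { unfold jump_err. fold y. unfold Rdiv. apply Rmult_le_compat_l; [lra|].
    apply Rinv_le_contravar; [lra|]. unfold a. pose proof (Rmin_l tau 1). lra. }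
  assert (0 < g_in k y) by (unfold g_in; rewrite X2; apply Rinv_0_lt_compat; lra).
  rewrite W0. unfold err_in. unfold Rdiv in *. lra.
Qed.

Lemma x_mu_val L mu : 0 < L -> 0 < mu -> x_mu (2 * PI / L) mu = sqrt mu * L / (2 * PI).
Proof.
  intros HL Hm. pose proof PI_RGT_0. unfold x_mu.
  replace (mu / (2 * PI / L) ^ 2) with ((sqrt mu * L / (2 * PI)) ^ 2).
  - apply sqrt_pow2, Rdiv_le_0_compat; [apply Rmult_le_pos; [apply sqrt_pos|]|]; lra.
  - replace ((sqrt mu * L / (2 * PI)) ^ 2) with (sqrt mu ^ 2 * L ^ 2 / (2 * PI) ^ 2) by (field; lra).
    rewrite pow2_sqrt by lra. field. lra.
Qed.

(** Adding the [2 / L^2] of the boundary terms still leaves [4 / (a L^2)] to spare. *)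
Lemma err_total_le_K L mu tau : 0 < L -> 0 < mu -> - mu < tau ->
  / L ^ 2 * err_total (2 * PI / L) mu tau + 2 / L ^ 2 <= Kconst tau mu L / L.
Proof.
  intros HL Hm Ht. pose proof PI_RGT_0.
  unfold err_total, Kconst. rewrite x_mu_val by auto.
  set (a := mu + Rmin tau 1).
  assert (Ha0 : 0 < a) by (unfold a, Rmin; destruct Rle_dec; lra).
  pose proof (sqrt_lt_R0 a Ha0).
  assert (0 < 4 / (a * L ^ 2)) by (apply Rdiv_lt_0_compat; [|apply Rmult_lt_0_compat]; nra).
  enough (/ L ^ 2 * (2 * PI / (2 * PI / L) * (1 + / sqrt a) + 1 + 2 / a
            + 8 * (sqrt mu * L / (2 * PI)) / a) + 2 / L ^ 2
          = (1 + 3 / L + / sqrt a + (4 * sqrt mu / PI + 6 / L) * / a) / L - 4 / (a * L ^ 2)) by lra.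
  field. repeat split; lra.
Qed.

(** * Square partial sums of the lattice sum *)

Lemma sum_lt_telescope_abs (a : nat -> R) (P W : R -> R) (y : nat -> R) M :
  (forall m, (m < M)%nat ->
     Rabs (a m - (P (y (S m)) - P (y m))) <= W (y (S m)) - W (y m)) ->
  Rabs (sum_lt a M - (P (y M) - P (y 0%nat))) <= W (y M) - W (y 0%nat).
Proof.
  induction M as [|M IH]; intros H; cbn [sum_lt].
  - replace (0 - (P (y 0%nat) - P (y 0%nat))) with 0 by ring. rewrite Rabs_R0. lra.
  - replace (sum_lt a M + a M - (P (y (S M)) - P (y 0%nat))) with
      ((sum_lt a M - (P (y M) - P (y 0%nat))) + (a M - (P (y (S M)) - P (y M)))) by ring.
    eapply Rle_trans; [apply Rabs_triang|].
    pose proof (IH ltac:(intros; apply H; lia)). pose proof (H M ltac:(lia)). lra.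
Qed.

Lemma G_term_shell_val L mu tau a b :
  G_term L (-1) mu tau a b = shell_val (2 * PI / L) mu tau (normsq a b).
Proof. unfold G_term, shell_val, ksq, normsq. do 2 f_equal. ring. Qed.

Definition outside_sum (k mu tau : R) (N : nat) : R :=
  symsum (fun a => symsum (fun b =>
    (1 - ind_le (normsq a b) (INR (N * N))) * shell_val k mu tau (normsq a b)) N) N.

Lemma sq_sum_G_term_split L mu tau N :
  let k := 2 * PI / L in
  sq_sum (G_term L (-1) mu tau) N =
  disc_count N (INR (N * N)) * shell_val k mu tau (INR (N * N))
  + sum_lt (fun m => disc_count N (INR m)
                     * (shell_val k mu tau (INR m) - shell_val k mu tau (INR (S m)))) (N * N)
  + outside_sum k mu tau N.
Proof.
  intros k. rewrite <- abel_summation_shells, sq_sum_symsum. unfold outside_sum.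
  rewrite <- symsum_plus. apply symsum_ext. intros a.
  rewrite <- symsum_plus. apply symsum_ext. intros b. rewrite G_term_shell_val. fold k. ring.
Qed.

Lemma abel_sum_error k mu tau N : 0 < k -> 0 < mu -> - mu < tau -> x_mu k mu < INR N ->
  Rabs (sum_lt (fun m => disc_count N (INR m)
                         * (shell_val k mu tau (INR m) - shell_val k mu tau (INR (S m)))) (N * N)
        - area_out k mu tau (INR N))
  <= err_total k mu tau.
Proof.
  intros Hk Hm Ht HN. destruct (x_mu_spec k mu Hk Hm) as [X1 X2].
  pose proof (sum_lt_telescope_abs _ (area_prim k mu tau) (err_prim k mu tau)
    (fun m => sqrt (INR m)) (N * N) (fun m Hm' => abel_step k mu tau N m Hk Hm Ht Hm')) as T.
  cbv beta in T. rewrite INR_0, sqrt_0, mult_INR, sqrt_square in T by apply pos_INR.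
  assert (P0 : area_prim k mu tau 0 = 0).
  { unfold area_prim, area_in, g_in. destruct Rle_dec; [|lra].
    replace (k ^ 2 * 0 ^ 2 + 1) with 1 by ring. rewrite ln_1. field. lra. }
  assert (PN : area_prim k mu tau (INR N) = area_out k mu tau (INR N))
    by (unfold area_prim; destruct Rle_dec; lra).
  rewrite P0, PN, Rminus_0_r in T.
  pose proof (err_prim_increment_le k mu tau (INR N) Hk Hm Ht HN). lra.
Qed.

(** Error terms at the edge of the square: the lattice-count error on the last shell, the
    points of the square outside the disc, and the difference of the two logarithms in
    [area_out]. *)
Definition boundary_err (L mu tau : R) (N : nat) : R :=
  let k := 2 * PI / L in
  / L ^ 2 * (Rabs (disc_count N (INR (N * N)) - PI * INR N ^ 2) * Rabs (g_out k tau (INR N))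
             + Rabs (outside_sum k mu tau N))
  + / (4 * PI) * Rabs (ln (k ^ 2 * INR N ^ 2 + 1) - ln (k ^ 2 * INR N ^ 2 + tau)).

Lemma G_partial_error L mu tau N : 0 < L -> 0 < mu -> - mu < tau ->
  x_mu (2 * PI / L) mu < INR N ->
  Rabs (G_partial L (-1) mu tau N - / (4 * PI) * ln (mu + tau))
  <= / L ^ 2 * err_total (2 * PI / L) mu tau + boundary_err L mu tau N.
Proof.
  intros HL Hm Ht HN. pose proof PI_RGT_0. set (k := 2 * PI / L) in *.
  assert (Hk : 0 < k) by (unfold k; apply Rdiv_lt_0_compat; lra).
  destruct (x_mu_spec k mu Hk Hm) as [X1 X2].
  pose proof (abel_sum_error k mu tau N Hk Hm Ht HN) as E.
  assert (GN : shell_val k mu tau (INR (N * N)) = g_out k tau (INR N)).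
  { rewrite mult_INR. replace (INR N * INR N) with (INR N ^ 2) by ring.
    apply shell_val_out; auto. apply pos_INR. }
  unfold G_partial, boundary_err. rewrite sq_sum_G_term_split. fold k. rewrite GN.
  set (A := disc_count N (INR (N * N))) in *. set (sab := sum_lt _ (N * N)) in *.
  set (O := outside_sum k mu tau N). set (p := g_out k tau (INR N)) in *.
  set (l1 := ln (k ^ 2 * INR N ^ 2 + 1)). set (l2 := ln (k ^ 2 * INR N ^ 2 + tau)).
  assert (HL2 : 0 < / L ^ 2) by (apply Rinv_0_lt_compat, pow_lt; lra).
  assert (H4P : 0 < / (4 * PI)) by (apply Rinv_0_lt_compat; lra).
  replace (/ L ^ 2 * (A * p + sab + O) - / (4 * PI) * ln (mu + tau)) with
    (/ L ^ 2 * (sab - area_out k mu tau (INR N))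
     + (/ L ^ 2 * ((A - PI * INR N ^ 2) * p + O) + / (4 * PI) * (l1 - l2)))
    by (unfold area_out; fold p l1 l2; unfold k; field; lra).
  eapply Rle_trans; [apply Rabs_triang|]. apply Rplus_le_compat.
  - rewrite Rabs_mult, Rabs_right by lra. apply Rmult_le_compat_l; lra.
  - eapply Rle_trans; [apply Rabs_triang|].
    rewrite !Rabs_mult, (Rabs_right (/ L ^ 2)), (Rabs_right (/ (4 * PI))) by lra.
    apply Rplus_le_compat_r, Rmult_le_compat_l; [lra|].
    eapply Rle_trans; [apply Rabs_triang|]. rewrite Rabs_mult. lra.
Qed.

Lemma inv_diff_bound s tau : 2 * Rabs tau + 2 <= s ->
  Rabs (/ (s + 1) - / (s + tau)) <= 2 * Rabs (tau - 1) / s ^ 2.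
Proof.
  intros Hs. pose proof (Rabs_pos tau).
  pose proof (proj1 (Rabs_le_between tau (Rabs tau)) (Rle_refl _)).
  replace (/ (s + 1) - / (s + tau)) with ((tau - 1) / ((s + 1) * (s + tau))) by (field; lra).
  unfold Rdiv. rewrite Rabs_mult, (Rabs_right (/ _)) by (left; apply Rinv_0_lt_compat; nra).
  replace (2 * Rabs (tau - 1) * / s ^ 2) with (Rabs (tau - 1) * / (s * (s / 2))) by (field; lra).
  apply Rmult_le_compat_l; [apply Rabs_pos|]. apply Rinv_le_contravar; nra.
Qed.

Lemma ln_le_minus_1 z : 0 < z -> ln z <= z - 1.
Proof. intros. pose proof (exp_ineq1_le (ln z)). rewrite exp_ln in *; lra. Qed.

Lemma ln_diff_bound s tau : 2 * Rabs tau + 2 <= s ->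
  Rabs (ln (s + 1) - ln (s + tau)) <= 2 * Rabs (tau - 1) / s.
Proof.
  intros Hs. pose proof (Rabs_pos tau).
  pose proof (proj1 (Rabs_le_between tau (Rabs tau)) (Rle_refl _)).
  assert (Hp1 : 0 < s + 1) by lra. assert (Hp2 : 0 < s + tau) by lra.
  assert (Hs2 : 2 * Rabs (tau - 1) / s = Rabs (tau - 1) * / (s / 2)) by (field; lra).
  rewrite <- ln_div by auto.
  assert (Up : ln ((s + 1) / (s + tau)) <= (1 - tau) / (s + tau)).
  { eapply Rle_trans; [apply ln_le_minus_1, Rdiv_lt_0_compat; auto|]. right. field. lra. }
  assert (Lo : - ((tau - 1) / (s + 1)) <= ln ((s + 1) / (s + tau))).
  { replace ((s + 1) / (s + tau)) with (/ ((s + tau) / (s + 1))) by (field; lra).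
    rewrite ln_Rinv by (apply Rdiv_lt_0_compat; auto). apply Ropp_le_contravar.
    eapply Rle_trans; [apply ln_le_minus_1, Rdiv_lt_0_compat; auto|]. right. field. lra. }
  assert (A1 : Rabs (tau - 1) / (s + tau) <= 2 * Rabs (tau - 1) / s).
  { rewrite Hs2. unfold Rdiv at 1. apply Rmult_le_compat_l; [apply Rabs_pos|].
    apply Rinv_le_contravar; lra. }
  assert (A2 : Rabs (tau - 1) / (s + 1) <= 2 * Rabs (tau - 1) / s).
  { rewrite Hs2. unfold Rdiv at 1. apply Rmult_le_compat_l; [apply Rabs_pos|].
    apply Rinv_le_contravar; lra. }
  assert (0 <= Rabs (tau - 1) / (s + 1)) by (apply Rdiv_le_0_compat; [apply Rabs_pos|lra]).
  assert (0 <= Rabs (tau - 1) / (s + tau)) by (apply Rdiv_le_0_compat; [apply Rabs_pos|lra]).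
  pose proof (Rle_abs (tau - 1)). pose proof (Rle_abs (- (tau - 1))). rewrite Rabs_Ropp in *.
  assert (- (tau - 1) / (s + tau) <= Rabs (tau - 1) / (s + tau))
    by (unfold Rdiv; apply Rmult_le_compat_r; [left; apply Rinv_0_lt_compat|]; lra).
  assert ((tau - 1) / (s + 1) <= Rabs (tau - 1) / (s + 1))
    by (unfold Rdiv; apply Rmult_le_compat_r; [left; apply Rinv_0_lt_compat|]; lra).
  replace (1 - tau) with (- (tau - 1)) in Up by ring.
  apply Rabs_le; split; lra.
Qed.

Lemma shell_val_tail_bound k mu tau c s : 0 < k -> 0 < mu ->
  2 * Rabs tau + 2 + mu <= s -> s <= k ^ 2 * c ->
  Rabs (shell_val k mu tau c) <= 2 * Rabs (tau - 1) / s ^ 2.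
Proof.
  intros Hk Hm Hs Hc. pose proof (Rabs_pos tau). pose proof (Rabs_pos (tau - 1)).
  pose proof (proj1 (Rabs_le_between tau (Rabs tau)) (Rle_refl _)).
  unfold shell_val, chi_gt. destruct Rlt_dec as [h|h]; [|lra].
  replace (1 / (k ^ 2 * c + tau)) with (/ (k ^ 2 * c + tau)) by (field; lra).
  eapply Rle_trans; [apply inv_diff_bound; lra|].
  unfold Rdiv. apply Rmult_le_compat_l; [lra|]. apply Rinv_le_contravar; nra.
Qed.

Lemma outside_sum_bound k mu tau N : 0 < k -> 0 < mu -> 2 * Rabs tau + 2 + mu <= k ^ 2 * INR N ^ 2 ->
  Rabs (outside_sum k mu tau N)
  <= (2 * INR N + 1) * ((2 * INR N + 1) * (2 * Rabs (tau - 1) / (k ^ 2 * INR N ^ 2) ^ 2)).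
Proof.
  intros Hk Hm HN. unfold outside_sum. apply symsum_bound. intros a. apply symsum_bound. intros b.
  unfold ind_le. destruct Rle_dec as [h|h].
  - rewrite Rminus_diag, Rmult_0_l, Rabs_R0.
    apply Rdiv_le_0_compat; [pose proof (Rabs_pos (tau - 1)); lra|].
    apply pow_lt. pose proof (Rabs_pos tau). lra.
  - rewrite Rminus_0_r, Rmult_1_l. apply shell_val_tail_bound; auto.
    rewrite mult_INR in h. apply Rmult_le_compat_l; nra.
Qed.

(** The last summand is what makes the boundary errors at most [2 / L^2]. *)
Definition N_large (L mu tau : R) : R :=
  let k := 2 * PI / L in let q := Rabs (tau - 1) in
  x_mu k mu + 1 + (2 * Rabs tau + 2 + mu) / k ^ 2
  + (14 * q / k ^ 4 + q * L ^ 2 / (4 * PI * k ^ 2)).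

Lemma N_large_spec L mu tau n : 0 < L -> 0 < mu -> N_large L mu tau <= n ->
  let k := 2 * PI / L in let q := Rabs (tau - 1) in
  1 <= n /\ x_mu k mu < n /\ 2 * Rabs tau + 2 + mu <= k ^ 2 * n ^ 2
  /\ 14 * q / k ^ 4 + q * L ^ 2 / (4 * PI * k ^ 2) <= n ^ 2.
Proof.
  intros HL Hm HN k q. pose proof PI_RGT_0. pose proof (Rabs_pos tau).
  assert (Hk : 0 < k) by (unfold k; apply Rdiv_lt_0_compat; lra).
  assert (Hk2 : 0 < k ^ 2) by (apply pow_lt; lra).
  destruct (x_mu_spec k mu Hk Hm) as [X1 _].
  assert (0 <= 14 * q / k ^ 4 + q * L ^ 2 / (4 * PI * k ^ 2)).
  { assert (0 <= q) by apply Rabs_pos.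
    apply Rplus_le_le_0_compat; apply Rdiv_le_0_compat;
      try apply Rmult_le_pos; try apply pow_lt; try apply pow2_ge_0; nra. }
  assert (0 <= (2 * Rabs tau + 2 + mu) / k ^ 2) by (apply Rdiv_le_0_compat; lra).
  unfold N_large in HN. fold k q in HN.
  assert (1 <= n) by lra. assert (n <= n ^ 2) by nra.
  repeat split; try lra.
  apply Rmult_le_reg_r with (/ k ^ 2); [apply Rinv_0_lt_compat; lra|].
  replace (k ^ 2 * n ^ 2 * / k ^ 2) with (n ^ 2) by (field; lra). unfold Rdiv in *. nra.
Qed.

Lemma boundary_err_le L mu tau N : 0 < L -> 0 < mu -> - mu < tau -> N_large L mu tau <= INR N ->
  boundary_err L mu tau N <= 2 / L ^ 2.
Proof.
  intros HL Hm Ht HN. pose proof PI_RGT_0.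
  destruct (N_large_spec L mu tau (INR N) HL Hm HN) as (Hn1 & _ & Hs & HZ).
  unfold boundary_err. set (k := 2 * PI / L) in *. set (q := Rabs (tau - 1)) in *.
  set (n := INR N) in *. set (s := k ^ 2 * n ^ 2) in *.
  assert (Hk : 0 < k) by (unfold k; apply Rdiv_lt_0_compat; lra).
  assert (Hq : 0 <= q) by apply Rabs_pos. pose proof (Rabs_pos tau).
  assert (Hs0 : 0 < s) by lra.
  assert (G1 : Rabs (disc_count N (INR (N * N)) - PI * n ^ 2) <= 4 * n + 1).
  { rewrite mult_INR. fold n. replace (n * n) with (n ^ 2) by ring.
    replace (4 * n + 1) with (4 * sqrt (n ^ 2) + 1) by (rewrite sqrt_pow2; lra).
    apply disc_count_approx; [apply pow2_ge_0|apply Rle_refl]. }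
  assert (G2 : Rabs (g_out k tau n) <= 2 * q / s ^ 2)
    by (unfold g_out; fold s; apply inv_diff_bound; lra).
  pose proof (outside_sum_bound k mu tau N Hk Hm Hs) as G3. fold n s q in G3.
  pose proof (ln_diff_bound s tau ltac:(lra)) as G4. fold q in G4.
  assert (Hw : 0 <= 2 * q / s ^ 2) by (apply Rdiv_le_0_compat; [|apply pow_lt]; lra).
  assert (B1 : Rabs (disc_count N (INR (N * N)) - PI * n ^ 2) * Rabs (g_out k tau n)
               + Rabs (outside_sum k mu tau N) <= 14 * n ^ 2 * (2 * q / s ^ 2)).
  { assert (Rabs (disc_count N (INR (N * N)) - PI * n ^ 2) * Rabs (g_out k tau n)
            <= (4 * n + 1) * (2 * q / s ^ 2)) by (apply Rmult_le_compat; auto; apply Rabs_pos).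
    assert (Hc : (4 * n + 1) + (2 * n + 1) * (2 * n + 1) <= 14 * n ^ 2) by nra.
    apply Rmult_le_compat_r with (r := 2 * q / s ^ 2) in Hc; lra. }
  assert (HL2 : 0 < / L ^ 2) by (apply Rinv_0_lt_compat, pow_lt; lra).
  assert (HPi : 0 < / (4 * PI)) by (apply Rinv_0_lt_compat; lra).
  set (Z := 14 * q / k ^ 4 + q * L ^ 2 / (4 * PI * k ^ 2)) in *.
  assert (B2 : / L ^ 2 * (14 * n ^ 2 * (2 * q / s ^ 2)) + / (4 * PI) * (2 * q / s)
               = 2 / L ^ 2 * (Z / n ^ 2)) by (unfold Z, s, k; field; repeat split; lra).
  assert (B3 : 2 / L ^ 2 * (Z / n ^ 2) <= 2 / L ^ 2).
  { rewrite <- (Rmult_1_r (2 / L ^ 2)) at 2.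
    apply Rmult_le_compat_l; [apply Rdiv_le_0_compat; [|apply pow_lt]; lra|].
    apply Rmult_le_reg_r with (n ^ 2); [nra|].
    unfold Rdiv. rewrite Rmult_assoc, Rinv_l by nra. lra. }
  assert (/ L ^ 2 * (Rabs (disc_count N (INR (N * N)) - PI * n ^ 2) * Rabs (g_out k tau n)
          + Rabs (outside_sum k mu tau N)) <= / L ^ 2 * (14 * n ^ 2 * (2 * q / s ^ 2)))
    by (apply Rmult_le_compat_l; lra).
  assert (/ (4 * PI) * Rabs (ln (s + 1) - ln (s + tau)) <= / (4 * PI) * (2 * q / s))
    by (apply Rmult_le_compat_l; lra).
  fold s. lra.
Qed.

(** * Convergence *)

Lemma sq_sum_S F N : sq_sum F (S N) = sq_sum F N +
  (symsum (fun b => F (Z.of_nat (S N)) b) N + symsum (fun b => F (- Z.of_nat (S N))%Z b) N)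
  + symsum (fun a => F a (Z.of_nat (S N)) + F a (- Z.of_nat (S N))%Z) (S N).
Proof.
  rewrite !sq_sum_symsum.
  rewrite (symsum_ext (fun a => symsum (fun b => F a b) (S N))
     (fun a => symsum (fun b => F a b) N + (F a (Z.of_nat (S N)) + F a (- Z.of_nat (S N))%Z)))
    by (intros a; rewrite symsum_S; ring).
  rewrite symsum_plus, symsum_S. ring.
Qed.

Lemma sq_sum_S_sub_bound F N C :
  (forall a b, INR (S N) ^ 2 <= normsq a b -> Rabs (F a b) <= C) ->
  Rabs (sq_sum F (S N) - sq_sum F N) <= (8 * INR N + 8) * C.
Proof.
  intros HF. rewrite sq_sum_S.
  assert (Hp : IZR (Z.of_nat (S N)) ^ 2 = INR (S N) ^ 2) by (rewrite INR_IZR_INZ; auto).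
  assert (Hm : IZR (- Z.of_nat (S N)) ^ 2 = INR (S N) ^ 2) by apply IZR_opp_of_nat_pow2.
  assert (Hrow : forall a c, IZR c ^ 2 = INR (S N) ^ 2 -> Rabs (F c a) <= C /\ Rabs (F a c) <= C).
  { intros a c Hc. pose proof (pow2_ge_0 (IZR a)). unfold normsq in HF.
    split; apply HF; lra. }
  assert (E1 : Rabs (symsum (fun b => F (Z.of_nat (S N)) b) N) <= (2 * INR N + 1) * C)
    by (apply symsum_bound; intros b; apply (Hrow b _ Hp)).
  assert (E2 : Rabs (symsum (fun b => F (- Z.of_nat (S N))%Z b) N) <= (2 * INR N + 1) * C)
    by (apply symsum_bound; intros b; apply (Hrow b _ Hm)).
  assert (E3 : Rabs (symsum (fun a => F a (Z.of_nat (S N)) + F a (- Z.of_nat (S N))%Z) (S N))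
               <= (2 * INR (S N) + 1) * (C + C)).
  { apply symsum_bound. intros a. eapply Rle_trans; [apply Rabs_triang|].
    apply Rplus_le_compat; [apply (Hrow a _ Hp)|apply (Hrow a _ Hm)]. }
  rewrite S_INR in E3.
  replace (sq_sum F N + _ + _ - sq_sum F N) with
    (symsum (fun b => F (Z.of_nat (S N)) b) N + symsum (fun b => F (- Z.of_nat (S N))%Z b) N
     + symsum (fun a => F a (Z.of_nat (S N)) + F a (- Z.of_nat (S N))%Z) (S N)) by ring.
  eapply Rle_trans; [apply Rabs_triang|].
  eapply Rle_trans; [apply Rplus_le_compat_r, Rabs_triang|]. lra.
Qed.

(** The summands on the frame [|a| = N + 1] or [|b| = N + 1] are [O(N^-4)], and there are
    [O(N)] of them. *)
Lemma G_partial_increment_bound L mu tau N : 0 < L -> 0 < mu -> N_large L mu tau <= INR N ->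
  Rabs (G_partial L (-1) mu tau (S N) - G_partial L (-1) mu tau N)
  <= 16 * Rabs (tau - 1) / (L ^ 2 * (2 * PI / L) ^ 4) * (/ INR N - / INR (S N)).
Proof.
  intros HL Hm HN. pose proof PI_RGT_0.
  destruct (N_large_spec L mu tau (INR N) HL Hm HN) as (Hn1 & _ & Hs & _).
  set (k := 2 * PI / L) in *. set (q := Rabs (tau - 1)).
  assert (Hk : 0 < k) by (unfold k; apply Rdiv_lt_0_compat; lra).
  assert (Hq : 0 <= q) by apply Rabs_pos.
  set (n := INR N) in *. rewrite S_INR. fold n.
  set (s := k ^ 2 * (n + 1) ^ 2).
  assert (Hs1 : 2 * Rabs tau + 2 + mu <= s) by (unfold s; nra).
  assert (HC : Rabs (sq_sum (G_term L (-1) mu tau) (S N) - sq_sum (G_term L (-1) mu tau) N)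
               <= (8 * n + 8) * (2 * q / s ^ 2)).
  { apply sq_sum_S_sub_bound. intros a b Hab. rewrite G_term_shell_val. fold k.
    apply shell_val_tail_bound with (s := s); auto.
    unfold s. rewrite S_INR in Hab. fold n in Hab. apply Rmult_le_compat_l; nra. }
  unfold G_partial. rewrite <- Rmult_minus_distr_l, Rabs_mult, Rabs_right
    by (left; apply Rinv_0_lt_compat, pow_lt; lra).
  eapply Rle_trans; [apply Rmult_le_compat_l; [left; apply Rinv_0_lt_compat, pow_lt; lra|exact HC]|].
  replace (/ L ^ 2 * ((8 * n + 8) * (2 * q / s ^ 2)))
    with (16 * q / (L ^ 2 * k ^ 4) * / (n + 1) ^ 3) by (unfold s; field; repeat split; lra).
  replace (/ n - / (n + 1)) with (/ (n * (n + 1))) by (field; lra).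
  apply Rmult_le_compat_l.
  - apply Rdiv_le_0_compat; [lra|]. apply Rmult_lt_0_compat; apply pow_lt; lra.
  - apply Rinv_le_contravar; nra.
Qed.

Lemma Cauchy_crit_of_increments (u : nat -> R) (D : R) (N1 : nat) : (1 <= N1)%nat -> 0 <= D ->
  (forall n, (N1 <= n)%nat -> Rabs (u (S n) - u n) <= D * (/ INR n - / INR (S n))) ->
  Cauchy_crit u.
Proof.
  intros HN1 HD Hinc.
  assert (Tel : forall d m, (N1 <= m)%nat -> Rabs (u (m + d)%nat - u m) <= D * / INR m).
  { intros d m Hm. assert (0 < INR m) by (apply lt_0_INR; lia).
    enough (Rabs (u (m + d)%nat - u m) <= D * (/ INR m - / INR (m + d))).
    { assert (0 < INR (m + d)) by (apply lt_0_INR; lia).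
      assert (0 < / INR (m + d)) by (apply Rinv_0_lt_compat; lra). nra. }
    induction d as [|d IH].
    - rewrite Nat.add_0_r, Rminus_diag, Rminus_diag, Rabs_R0. lra.
    - replace (m + S d)%nat with (S (m + d)) by lia.
      replace (u (S (m + d)) - u m) with ((u (S (m + d)) - u (m + d)%nat) + (u (m + d)%nat - u m))
        by ring.
      eapply Rle_trans; [apply Rabs_triang|].
      pose proof (Hinc (m + d)%nat ltac:(lia)). lra. }
  intros eps He.
  destruct (INR_archimed eps (INR N1 * eps + D) He) as [N2 HN2].
  assert (HN12 : (N1 <= N2)%nat) by (apply INR_le; nra).
  exists N2. intros n m Hn Hm. unfold Rdist.
  assert (Small : forall p, (N2 <= p)%nat -> D * / INR p < eps).
  { intros p Hp. assert (INR N2 <= INR p) by (apply le_INR; lia).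
    assert (0 < INR p) by (apply lt_0_INR; lia).
    assert (0 <= INR N1 * eps) by (apply Rmult_le_pos; [apply pos_INR|lra]).
    assert (INR N2 * eps <= INR p * eps) by (apply Rmult_le_compat_r; lra).
    apply Rmult_lt_reg_r with (INR p); [lra|]. rewrite Rmult_assoc, Rinv_l by lra. lra. }
  destruct (le_ge_dec m n) as [h|h].
  - replace n with (m + (n - m))%nat by lia.
    pose proof (Tel (n - m)%nat m ltac:(lia)). pose proof (Small m Hm). lra.
  - replace m with (n + (m - n))%nat by lia. rewrite Rabs_minus_sym.
    pose proof (Tel (m - n)%nat n ltac:(lia)). pose proof (Small n Hn). lra.
Qed.

Lemma Un_cv_abs_le (u : nat -> R) l T B : Un_cv u l ->
  (exists N0, forall n, (N0 <= n)%nat -> Rabs (u n - T) <= B) -> Rabs (l - T) <= B.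
Proof.
  intros Hu [N0 HN0]. destruct (Rle_or_lt (Rabs (l - T)) B) as [h|h]; auto.
  destruct (Hu (Rabs (l - T) - B) ltac:(lra)) as [N1 HN1].
  set (n := Nat.max N0 N1).
  pose proof (HN0 n (Nat.le_max_l _ _)). pose proof (HN1 n (Nat.le_max_r _ _)) as Hn.
  unfold Rdist in Hn.
  pose proof (Rabs_triang (u n - T) (l - u n)) as Tr.
  replace (u n - T + (l - u n)) with (l - T) in Tr by ring.
  rewrite (Rabs_minus_sym l (u n)) in Tr. lra.
Qed.

Lemma G_partial_normalized_bound L mu tau : 0 < L -> 0 < mu -> - mu < tau ->
  exists G, Un_cv (G_partial L (-1) mu tau) G /\
            Rabs (G - / (4 * PI) * ln (mu + tau)) <= Kconst tau mu L / L.
Proof.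
  intros HL Hm Ht. pose proof PI_RGT_0.
  destruct (INR_archimed 1 (N_large L mu tau) Rlt_0_1) as [N1 HN1]. rewrite Rmult_1_r in HN1.
  assert (HN : forall n, (N1 <= n)%nat -> N_large L mu tau <= INR n)
    by (intros n Hn; apply le_INR in Hn; lra).
  assert (HN1' : (1 <= N1)%nat).
  { apply INR_le. destruct (N_large_spec L mu tau (INR N1) HL Hm (HN N1 (le_n _))). auto. }
  assert (Cc : Cauchy_crit (G_partial L (-1) mu tau)).
  { apply (Cauchy_crit_of_increments _ (16 * Rabs (tau - 1) / (L ^ 2 * (2 * PI / L) ^ 4)) N1); auto.
    - apply Rdiv_le_0_compat; [pose proof (Rabs_pos (tau - 1)); lra|].
      apply Rmult_lt_0_compat; apply pow_lt; [|apply Rdiv_lt_0_compat]; lra.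
    - intros n Hn. apply G_partial_increment_bound; auto. }
  destruct (Rcomplete.R_complete _ Cc) as [G HG]. exists G. split; auto.
  apply (Un_cv_abs_le _ G _ _ HG). exists N1. intros n Hn.
  destruct (N_large_spec L mu tau (INR n) HL Hm (HN n Hn)) as (_ & Hx & _).
  pose proof (G_partial_error L mu tau n HL Hm Ht Hx).
  pose proof (boundary_err_le L mu tau n HL Hm Ht (HN n Hn)).
  pose proof (err_total_le_K L mu tau HL Hm Ht). lra.
Qed.

(** * Rescaling to [E_B = -1] *)

Lemma sq_sum_scal c F N : sq_sum (fun a b => c * F a b) N = c * sq_sum F N.
Proof.
  rewrite !sq_sum_symsum, <- symsum_scal. apply symsum_ext. intros a. apply symsum_scal.
Qed.

Lemma sq_sum_ext F1 F2 N : (forall a b, F1 a b = F2 a b) -> sq_sum F1 N = sq_sum F2 N.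
Proof.
  intros H. rewrite !sq_sum_symsum. apply symsum_ext. intros a. apply symsum_ext. intros b.
  apply H.
Qed.

Lemma ksq_rescale L e a b : 0 < L -> 0 < e -> ksq (L * sqrt e) a b = ksq L a b / e.
Proof.
  intros HL He. pose proof (sqrt_lt_R0 e He). pose proof (sqrt_sqrt e (Rlt_le _ _ He)).
  pose proof PI_RGT_0. unfold ksq.
  replace ((2 * PI / (L * sqrt e)) ^ 2) with ((2 * PI / L) ^ 2 / (sqrt e * sqrt e)) by (field; lra).
  rewrite H0. field. lra.
Qed.

Lemma chi_gt_div mu x e : 0 < e -> chi_gt (mu / e) (x / e) = chi_gt mu x.
Proof.
  intros He. assert (0 < / e) by (apply Rinv_0_lt_compat; auto).
  unfold chi_gt, Rdiv. destruct Rlt_dec as [h|h]; destruct Rlt_dec as [h'|h']; auto.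
  - exfalso. apply h'. apply Rmult_lt_reg_r with (/ e); auto.
  - exfalso. apply h. apply Rmult_lt_compat_r; auto.
Qed.

Lemma G_term_rescale L EB mu tau e a b : 0 < L -> 0 < e -> EB < 0 -> 0 < mu -> - mu < tau ->
  G_term L EB mu tau a b = / e * G_term (L * sqrt e) (EB / e) (mu / e) (tau / e) a b.
Proof.
  intros HL He HE Hm Ht. unfold G_term. rewrite ksq_rescale, chi_gt_div by auto.
  assert (Hq : 0 <= ksq L a b).
  { unfold ksq. apply Rmult_le_pos; [apply pow2_ge_0|].
    apply Rplus_le_le_0_compat; apply pow2_ge_0. }
  unfold chi_gt. destruct Rlt_dec as [h|h].
  - field. repeat split; lra.
  - unfold Rdiv. rewrite !Rmult_0_l. field. lra.
Qed.

Lemma G_partial_rescale L EB mu tau N : 0 < L -> EB < 0 -> 0 < mu -> - mu < tau ->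
  G_partial L EB mu tau N
  = G_partial (L * sqrt (Rabs EB)) (-1) (mu / Rabs EB) (tau / Rabs EB) N.
Proof.
  intros HL HE Hm Ht. assert (He : 0 < Rabs EB) by (rewrite Rabs_left; lra).
  replace (-1) with (EB / Rabs EB) by (rewrite Rabs_left by lra; field; lra).
  unfold G_partial.
  rewrite (sq_sum_ext _ _ N (fun a b => G_term_rescale L EB mu tau (Rabs EB) a b HL He HE Hm Ht)).
  rewrite sq_sum_scal.
  replace ((L * sqrt (Rabs EB)) ^ 2) with (L ^ 2 * (sqrt (Rabs EB) * sqrt (Rabs EB))) by ring.
  rewrite sqrt_sqrt by lra. field. lra.
Qed.

Theorem lemma5p2 (EB mu tau L : R) (hEB : EB < 0) (hmu : 0 < mu)
  (htau : - mu < tau) (hL : 0 < L) :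
  exists G : R,
    Un_cv (G_partial L EB mu tau) G /\
    Rabs (G - / (4 * PI) * ln (mu / Rabs EB + tau / Rabs EB))
      <= Kconst (tau / Rabs EB) (mu / Rabs EB) (L * sqrt (Rabs EB))
         / (L * sqrt (Rabs EB)).
Proof.
  assert (He : 0 < Rabs EB) by (rewrite Rabs_left; lra).
  assert (HL' : 0 < L * sqrt (Rabs EB)) by (apply Rmult_lt_0_compat; [|apply sqrt_lt_R0]; lra).
  assert (Hm' : 0 < mu / Rabs EB) by (apply Rdiv_lt_0_compat; auto).
  assert (Ht' : - (mu / Rabs EB) < tau / Rabs EB)
    by (unfold Rdiv; rewrite Ropp_mult_distr_l; apply Rmult_lt_compat_r; [apply Rinv_0_lt_compat|]; lra).
  destruct (G_partial_normalized_bound _ _ _ HL' Hm' Ht') as [G [HG HB]].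
  exists G. split; [|exact HB].
  intros eps Heps. destruct (HG eps Heps) as [N0 HN0].
  exists N0. intros n Hn. rewrite G_partial_rescale; auto.
Qed.
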